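(* Let $\mathfrak C$ be a monster model of a complete theory $T$. Let $\pi_1(\bar x,\bar y),\dots,\pi_n(\bar x,\bar y)$ be partial types without parameters, with $\bar x,\bar y$ short tuples of variables of the same length and sorts, let $\bar a$ be a tuple from $\mathfrak C$ corresponding to $\bar x$ (and $\bar y$), and let $\epsilon_1,\dots,\epsilon_n\in\{-1,1\}$. (i) $A_{\pi_1,\bar a}^{\epsilon_1}\cdots A_{\pi_n,\bar a}^{\epsilon_n}=\bigcap\{A_{\varphi_1,\bar a}^{\epsilon_1}\cdots A_{\varphi_n,\bar a}^{\epsilon_n}:\varphi_i(\bar x,\bar y)\text{ formulas with }\pi_1\vdash\varphi_1,\dots,\pi_n\vdash\varphi_n\}$. (ii) If $A_{\pi_1,\bar a}^{\epsilon_1}\cdots A_{\pi_n,\bar a}^{\epsilon_n}$ is contained in a relatively definable subset $A$ of $\mathrm{Aut}(\mathfrak C)$, then there are formulas $\varphi_i(\bar x,\bar y)$ implied by $\pi_i(\bar x,\bar y)$, $i=1,\dots,n$, such that $A_{\varphi_1,\bar a}^{\epsilon_1}\cdots A_{\varphi_n,\bar a}^{\epsilon_n}\subseteq A$.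
   Context: $\mathfrak C$ is $\kappa$-saturated and strongly $\kappa$-homogeneous ($\kappa$ large); short means of length $<\kappa$. For a partial type (or formula) $\pi(\bar x,\bar y)$ without parameters and a tuple $\bar a$ from $\mathfrak C$, $A_{\pi,\bar a}=\{\sigma\in\mathrm{Aut}(\mathfrak C):\mathfrak C\models\pi(\sigma(\bar a),\bar a)\}$. A relatively definable subset of $\mathrm{Aut}(\mathfrak C)$ is one of the form $\{\sigma\in\mathrm{Aut}(\mathfrak C):\mathfrak C\models\psi(\sigma(\bar d),\bar e)\}$ for a formula $\psi$ without parameters and tuples $\bar d,\bar e$ from $\mathfrak C$. $X^{1}=X$ and $X^{-1}=\{\sigma^{-1}:\sigma\in X\}$; products are taken in the group. *)

From Stdlib Require Import List.
Import ListNotations.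

Definition idx (n : nat) : Type := {i : nat | i < n}.

Record language := Language {
  sort : Type;
  fsym : Type;
  rsym : Type;
  farity : fsym -> nat;
  fargs : forall f, idx (farity f) -> sort;
  fout : fsym -> sort;
  rarity : rsym -> nat;
  rargs : forall r, idx (rarity r) -> sort }.
Arguments farity {l} f.
Arguments fargs {l} f i.
Arguments fout {l} f.
Arguments rarity {l} r.
Arguments rargs {l} r i.

Section Syntax.
Variable L : language.

Inductive term (X : sort L -> Type) : sort L -> Type :=
| tvar (s : sort L) : X s -> term X s
| tapp (f : fsym L) : (forall i : idx (farity f), term X (fargs f i)) -> term X (fout f).

(* variables of X plus one new variable of sort s *)
Definition ext (X : sort L -> Type) (s : sort L) : sort L -> Type :=
  fun s' => (X s' + (s = s'))%type.

(* first-order formulas (without parameters) with free variables in X;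
   the other connectives/quantifiers are abbreviations *)
Inductive formula : (sort L -> Type) -> Type :=
| frel (X : sort L -> Type) (r : rsym L) :
    (forall i : idx (rarity r), term X (rargs r i)) -> formula X
| feq (X : sort L -> Type) (s : sort L) : term X s -> term X s -> formula X
| fneg (X : sort L -> Type) : formula X -> formula X
| fand (X : sort L -> Type) : formula X -> formula X -> formula X
| fex (X : sort L -> Type) (s : sort L) : formula (ext X s) -> formula X.

Record structure := Structure {
  carrier : sort L -> Type;
  finterp : forall f, (forall i : idx (farity f), carrier (fargs f i)) -> carrier (fout f);
  rinterp : forall r, (forall i : idx (rarity r), carrier (rargs r i)) -> Prop }.

Variable M : structure.

Fixpoint eval (X : sort L -> Type) (env : forall s, X s -> carrier M s)
  (s : sort L) (t : term X s) {struct t} : carrier M s :=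
  match t with
  | tvar _ s x => env s x
  | tapp _ f args => finterp M f (fun i => eval X env _ (args i))
  end.
Arguments eval {X} env {s} t.

Definition extend (X : sort L -> Type) (env : forall s, X s -> carrier M s)
  (s : sort L) (m : carrier M s) : forall s', ext X s s' -> carrier M s' :=
  fun s' v => match v with
              | inl x => env s' x
              | inr e => eq_rect s (carrier M) m s' e
              end.
Arguments extend {X} env {s} m.

Fixpoint sat (X : sort L -> Type) (phi : formula X) {struct phi} :
  (forall s, X s -> carrier M s) -> Prop :=
  match phi in formula X0 return (forall s, X0 s -> carrier M s) -> Prop with
  | frel _ r args => fun env => rinterp M r (fun i => eval env (args i))
  | feq _ _ t u => fun env => eval env t = eval env u
  | fneg _ p => fun env => ~ sat _ p env
  | fand _ p q => fun env => sat _ p env /\ sat _ q env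
  | fex _ s p => fun env => exists m : carrier M s, sat _ p (extend env m)
  end.
Arguments sat {X} phi env.

Record aut := Aut {
  af : forall s, carrier M s -> carrier M s;
  ab : forall s, carrier M s -> carrier M s;
  af_ab : forall s m, af s (ab s m) = m;
  ab_af : forall s m, ab s (af s m) = m;
  af_fun : forall f (args : forall i : idx (farity f), carrier M (fargs f i)),
      af _ (finterp M f args) = finterp M f (fun i => af _ (args i));
  af_rel : forall r (args : forall i : idx (rarity r), carrier M (rargs r i)),
      rinterp M r (fun i => af _ (args i)) <-> rinterp M r args }.
Arguments af a {s} m.
Arguments ab a {s} m.

(* subsets of Aut(M) and the group operations on them;
   the group product is composition: (sigma tau)(m) = sigma (tau m) *)
Definition autset := aut -> Prop.

Definition aset_id : autset := fun sigma => forall (s : sort L) (m : carrier M s), af sigma m = m.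

Definition aset_mul (A B : autset) : autset := fun sigma =>
  exists tau rho, A tau /\ B rho /\
    forall (s : sort L) (m : carrier M s), af sigma m = af tau (af rho m).

Definition aset_inv (A : autset) : autset := fun sigma =>
  exists tau, A tau /\ forall (s : sort L) (m : carrier M s), af sigma m = ab tau m.

(* X^eps with eps = true meaning +1 and eps = false meaning -1 *)
Definition aset_pow (A : autset) (eps : bool) : autset :=
  if eps then A else aset_inv A.

Definition aset_prod (l : list (autset * bool)) : autset :=
  fold_right (fun p acc => aset_mul (aset_pow (fst p) (snd p)) acc) aset_id l.

(* variables xbar, ybar: two copies of a sorted tuple of variables indexed by I *)
Definition XY (I : Type) (sI : I -> sort L) : sort L -> Type :=
  fun s => ({i : I | sI i = s} + {i : I | sI i = s})%type.
Arguments XY {I} sI s.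

Definition pair_env (I : Type) (sI : I -> sort L)
  (b c : forall i, carrier M (sI i)) : forall s, XY sI s -> carrier M s :=
  fun s v => match v with
             | inl (exist _ i e) => eq_rect (sI i) (carrier M) (b i) s e
             | inr (exist _ i e) => eq_rect (sI i) (carrier M) (c i) s e
             end.
Arguments pair_env {I sI} b c s v.

Definition A_type (I : Type) (sI : I -> sort L) (a : forall i, carrier M (sI i))
  (pi : formula (XY sI) -> Prop) : autset := fun sigma =>
  forall phi, pi phi -> sat phi (pair_env (fun i => af sigma (a i)) a).

Definition A_form (I : Type) (sI : I -> sort L) (a : forall i, carrier M (sI i))
  (phi : formula (XY sI)) : autset := fun sigma =>
  sat phi (pair_env (fun i => af sigma (a i)) a).

(* pi |- phi modulo T = Th(M) (T complete, M |= T): some finite part of pi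
   implies phi in T, i.e. M |= forall xy (/\ l -> phi) *)
Definition entails (X : sort L -> Type) (pi : formula X -> Prop)
  (phi : formula X) : Prop :=
  exists l : list (formula X), (forall psi, In psi l -> pi psi) /\
    forall env, (forall psi, In psi l -> sat psi env) -> sat phi env.

Definition rel_definable (A : autset) : Prop :=
  exists (D E : sort L -> Type) (psi : formula (fun s => (D s + E s)%type))
         (d : forall s, D s -> carrier M s) (e : forall s, E s -> carrier M s),
    forall sigma, A sigma <->
      sat psi (fun s v => match v with
                          | inl x => af sigma (d s x)
                          | inr y => e s y
                          end).

(* cardinality strictly below kappa = |K| *)
Definition small (K A : Type) : Prop :=
  (exists f : A -> K, forall x y, f x = f y -> x = y) /\
  ~ (exists g : K -> A, forall x y, g x = g y -> x = y).

Definition saturated (K : Type) : Prop :=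
  forall (P : sort L -> Type) (b : forall s, P s -> carrier M s),
    small K {s : sort L & P s} ->
    forall (s0 : sort L) (Sigma : formula (ext P s0) -> Prop),
      (forall l : list (formula (ext P s0)), (forall psi, In psi l -> Sigma psi) ->
         exists m : carrier M s0, forall psi, In psi l -> sat psi (extend b m)) ->
      exists m : carrier M s0, forall psi, Sigma psi -> sat psi (extend b m).

Definition strongly_homogeneous (K : Type) : Prop :=
  forall (J : sort L -> Type), small K {s : sort L & J s} ->
    forall c d : forall s, J s -> carrier M s,
      (forall phi : formula J, sat phi c <-> sat phi d) ->
      exists sigma : aut, forall s j, af sigma (c s j) = d s j.

End Syntax.

Arguments term {L} X s.
Arguments tvar {L X} s x.
Arguments tapp {L X} f args.
Arguments ext {L} X s s'.
Arguments formula {L} X.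
Arguments frel {L X} r args.
Arguments feq {L X s} t u.
Arguments fneg {L X} phi.
Arguments fand {L X} phi psi.
Arguments fex {L X} s phi.
Arguments carrier {L} s s0.
Arguments finterp {L} s f _.
Arguments rinterp {L} s r _.
Arguments eval {L M X} env {s} t.
Arguments extend {L M X} env {s} m s' v.
Arguments sat {L M X} phi env.
Arguments aut {L} M.
Arguments af {L M} a {s} m.
Arguments ab {L M} a {s} m.
Arguments autset {L} M.
Arguments aset_id {L M} sigma.
Arguments aset_mul {L M} A B sigma.
Arguments aset_inv {L M} A sigma.
Arguments aset_pow {L M} A eps sigma.
Arguments aset_prod {L M} l sigma.
Arguments XY {L I} sI s.
Arguments pair_env {L M I sI} b c s v.
Arguments A_type {L M I sI} a pi sigma.
Arguments A_form {L M I sI} a phi sigma.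
Arguments entails {L} M {X} pi phi.
Arguments rel_definable {L M} A.
Arguments saturated {L} M K.
Arguments strongly_homogeneous {L} M K.

(* A product [A_{pi_1,a}^{e_1} ... A_{pi_n,a}^{e_n}] consists of the [sigma] admitting a chain
   [a = c_0, c_1, ..., c_n = sigma(a)] of conjugates of [a] whose consecutive terms satisfy [pi_k]
   (in the order prescribed by [e_k]).  For (i): if [sigma] lies in every product of formulas
   implied by the [pi_k], the conditions on such a chain ending at [sigma(a)] are finitely
   satisfiable, so saturation realizes them and strong homogeneity turns each [c_k] into a
   conjugate of [a].  For (ii): if no choice of formulas worked, the same compactness argument,
   applied to a chain together with an image [w] of the parameters [d] of
   [A = {sigma | psi(sigma(d), e)}] and the condition [~ psi(w, e)], yields by homogeneity some
   [sigma] in the product with [sigma(d) = w], hence outside [A].  Saturation is only assumed in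
   one variable; it extends to fewer than [kappa] variables by Zorn's lemma, and the sets of
   variables stay small because a Dedekind-infinite set absorbs finitely many copies of itself. *)

From Stdlib Require Import List Arith Lia Classical ClassicalEpsilon FunctionalExtensionality ProofIrrelevance.
Import ListNotations.

Lemma dependent_choice (A : Type) (B : A -> Type) (R : forall x, B x -> Prop) :
  (forall x, exists y, R x y) -> exists f : forall x, B x, forall x, R x (f x).
Proof.
  intro H.
  exists (fun x => proj1_sig (constructive_indefinite_description _ (H x))).
  intro x. exact (proj2_sig (constructive_indefinite_description _ (H x))).
Qed.

Definition idx_enum (n : nat) : list (idx n) :=
  flat_map (fun k => match lt_dec k n with left h => [exist _ k h] | right _ => [] end) (seq 0 n).

Lemma In_idx_enum n (i : idx n) : In i (idx_enum n).
Proof.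
  destruct i as [k h]. apply in_flat_map. exists k. split.
  - apply in_seq. lia.
  - destruct (lt_dec k n) as [h'|h']; [|lia]. left. f_equal. apply proof_irrelevance.
Qed.

Section Syntax.
Variable L : language.

Fixpoint term_rename {X Y : sort L -> Type} (f : forall s, X s -> Y s) {s} (t : term X s) : term Y s :=
  match t with
  | tvar s x => tvar s (f s x)
  | tapp g args => tapp g (fun i => term_rename f (args i))
  end.

Definition ext_lift {X Y : sort L -> Type} {s} (f : forall s, X s -> Y s) :
  forall s', ext X s s' -> ext Y s s' :=
  fun s' v => match v with inl x => inl (f s' x) | inr e => inr e end.

Fixpoint formula_rename {X} (phi : formula X) :
  forall Y, (forall s, X s -> Y s) -> formula Y :=
  match phi in formula X0 return forall Y, (forall s, X0 s -> Y s) -> formula Y with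
  | frel r args => fun Y f => frel r (fun i => term_rename f (args i))
  | feq t u => fun Y f => feq (term_rename f t) (term_rename f u)
  | fneg p => fun Y f => fneg (formula_rename p Y f)
  | fand p q => fun Y f => fand (formula_rename p Y f) (formula_rename q Y f)
  | fex s p => fun Y f => fex s (formula_rename p (ext Y s) (ext_lift f))
  end.

Definition ftrue {X : sort L -> Type} s (x : X s) : formula X := feq (tvar s x) (tvar s x).

Definition fverum {X : sort L -> Type} (phi : formula X) : formula X := fneg (fand phi (fneg phi)).

Definition big_and {X : sort L -> Type} (phi : formula X) (D : list (formula X)) : formula X :=
  fold_right fand phi D.

Variable M : structure L.

Lemma eval_rename {X Y} (f : forall s, X s -> Y s) (env : forall s, Y s -> carrier M s) s
  (t : term X s) : eval env (term_rename f t) = eval (fun s x => env s (f s x)) t.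
Proof.
  induction t as [s x|g args IH]; simpl; auto.
  f_equal. apply functional_extensionality_dep; intro i. apply IH.
Qed.

Lemma extend_ext_lift {X Y} s (f : forall s, X s -> Y s) (env : forall s, Y s -> carrier M s)
  (m : carrier M s) :
  (fun s' v => extend env m s' (ext_lift f s' v)) = extend (fun s x => env s (f s x)) m.
Proof.
  apply functional_extensionality_dep; intro s'.
  apply functional_extensionality; intros [x|e]; reflexivity.
Qed.

Lemma sat_rename {X} (phi : formula X) :
  forall Y (f : forall s, X s -> Y s) (env : forall s, Y s -> carrier M s),
  sat (formula_rename phi Y f) env <-> sat phi (fun s x => env s (f s x)).
Proof.
  induction phi as [X r args|X s t u|X p IH|X p IHp q IHq|X s p IH]; intros Y f env; simpl.
  - replace (fun i => eval env (term_rename f (args i)))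
      with (fun i => eval (fun s x => env s (f s x)) (args i)); [tauto|].
    apply functional_extensionality_dep; intro i. symmetry; apply eval_rename.
  - rewrite !eval_rename. tauto.
  - rewrite IH. tauto.
  - rewrite IHp, IHq. tauto.
  - split; intros [m Hm]; exists m; [rewrite IH, extend_ext_lift in Hm | rewrite IH, extend_ext_lift];
      exact Hm.
Qed.

Lemma sat_big_and {X : sort L -> Type} (phi : formula X) D (env : forall s, X s -> carrier M s) :
  sat (big_and phi D) env <-> sat phi env /\ forall psi, In psi D -> sat psi env.
Proof.
  induction D as [|psi D IH]; simpl; [firstorder|].
  rewrite IH. firstorder; subst; auto.
Qed.

Lemma sat_ftrue {X : sort L -> Type} s (x : X s) (env : forall s, X s -> carrier M s) :
  sat (ftrue s x) env.
Proof. reflexivity. Qed.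

Lemma sat_fverum {X : sort L -> Type} (phi : formula X) (env : forall s, X s -> carrier M s) :
  sat (fverum phi) env.
Proof. simpl. tauto. Qed.

Lemma eval_aut (g : aut M) {X} (env : forall s, X s -> carrier M s) s (t : term X s) :
  eval (fun s x => af g (env s x)) t = af g (eval env t).
Proof.
  induction t as [s x|h args IH]; simpl; auto.
  rewrite af_fun. f_equal. apply functional_extensionality_dep; intro i. apply IH.
Qed.

Lemma extend_aut (g : aut M) {X} (env : forall s, X s -> carrier M s) s (m : carrier M s) :
  extend (fun s x => af g (env s x)) (af g m) = (fun s' v => af g (extend env m s' v)).
Proof.
  apply functional_extensionality_dep; intro s'.
  apply functional_extensionality; intros [x|e]; simpl; auto.
  destruct e. reflexivity.
Qed.

Lemma sat_aut (g : aut M) {X} (phi : formula X) :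
  forall env : forall s, X s -> carrier M s, sat phi (fun s x => af g (env s x)) <-> sat phi env.
Proof.
  induction phi as [X r args|X s t u|X p IH|X p IHp q IHq|X s p IH]; intros env; simpl.
  - replace (fun i => eval (fun s x => af g (env s x)) (args i))
      with (fun i => af g (eval env (args i))); [apply af_rel|].
    apply functional_extensionality_dep; intro i. symmetry; apply eval_aut.
  - rewrite !eval_aut. split; intro H; [|congruence].
    apply (f_equal (fun z => ab g z)) in H. rewrite !ab_af in H. exact H.
  - rewrite IH. tauto.
  - rewrite IHp, IHq. tauto.
  - split; intros [m Hm].
    + exists (ab g m). rewrite <- IH, <- extend_aut, af_ab. exact Hm.
    + exists (af g m). rewrite extend_aut, IH. exact Hm.
Qed.

(** * Finite support *)

Section Transport.
Variables X Y : sort L -> Type.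
Variable k : forall s, X s -> option (Y s).

Definition defined_on (F : list {s & X s}) :=
  forall s x, In (existT _ s x) F -> k s x <> None.

Definition agree_on (F : list {s & X s}) (envX : forall s, X s -> carrier M s)
  (envY : forall s, Y s -> carrier M s) :=
  forall s x y, In (existT _ s x) F -> k s x = Some y -> envX s x = envY s y.

Lemma defined_on_incl F G : incl F G -> defined_on G -> defined_on F.
Proof. intros H HG s x Hx. apply HG, H, Hx. Qed.

Lemma agree_on_incl F G envX envY : incl F G -> agree_on G envX envY -> agree_on F envX envY.
Proof. intros H HG s x y Hx. apply HG, H, Hx. Qed.
End Transport.

Arguments defined_on {X Y} k F.
Arguments agree_on {X Y} k F envX envY.
Arguments defined_on_incl {X Y k F G}.
Arguments agree_on_incl {X Y k F G envX envY}.

Definition term_transports {X s} (t : term X s) (F : list {s & X s}) :=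
  forall Y (k : forall s, X s -> option (Y s)), defined_on k F ->
  exists t' : term Y s, forall envY envX, agree_on k F envX envY -> eval envY t' = eval envX t.

Definition formula_transports {X} (phi : formula X) (F : list {s & X s}) :=
  forall Y (k : forall s, X s -> option (Y s)), defined_on k F ->
  exists phi' : formula Y, forall envY envX, agree_on k F envX envY ->
    (sat phi' envY <-> sat phi envX).

Lemma family_transports {X n} {srt : idx n -> sort L} (args : forall i, term X (srt i)) :
  (forall i, exists F, term_transports (args i) F) ->
  exists F, forall Y (k : forall s, X s -> option (Y s)), defined_on k F ->
  exists args' : forall i, term Y (srt i), forall envY envX, agree_on k F envX envY ->
    (fun i => eval envY (args' i)) = (fun i => eval envX (args i)).
Proof.
  intro H. destruct (dependent_choice _ _ _ H) as [Fs HFs].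
  set (F := flat_map Fs (idx_enum n)).
  assert (HF : forall i, incl (Fs i) F).
  { intros i x Hx. apply in_flat_map. exists i. split; [apply In_idx_enum | exact Hx]. }
  exists F. intros Y k Hk.
  destruct (dependent_choice _ (fun i => term Y (srt i))
     (fun i t' => forall envY envX, agree_on k (Fs i) envX envY -> eval envY t' = eval envX (args i)))
     as [args' Hargs'].
  { intro i. apply HFs. exact (defined_on_incl (HF i) Hk). }
  exists args'. intros envY envX Ha. apply functional_extensionality_dep; intro i.
  apply Hargs'. exact (agree_on_incl (HF i) Ha).
Qed.

Lemma term_transport {X s} (t : term X s) : exists F, term_transports t F.
Proof.
  induction t as [s x|h args IH].
  - exists [existT _ s x]. intros Y k Hk.
    destruct (k s x) as [y|] eqn:E; [|exfalso; apply (Hk s x); [left|]; auto].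
    exists (tvar s y). intros envY envX Ha. symmetry. apply (Ha s x y); [left|]; auto.
  - destruct (family_transports args IH) as [F HF]. exists F. intros Y k Hk.
    destruct (HF Y k Hk) as [args' Hargs']. exists (tapp h args').
    intros envY envX Ha. simpl. rewrite (Hargs' _ _ Ha). reflexivity.
Qed.

Definition proj_inl {X : sort L -> Type} {s} (v : {s' & ext X s s'}) : list {s & X s} :=
  match v with existT _ s' (inl x) => [existT _ s' x] | existT _ s' (inr _) => [] end.

Definition ext_lift_partial {X Y : sort L -> Type} s (k : forall s, X s -> option (Y s)) :
  forall s', ext X s s' -> option (ext Y s s') :=
  fun s' v => match v with inl x => option_map inl (k s' x) | inr e => Some (inr e) end.

Lemma formula_transport {X} (phi : formula X) : exists F, formula_transports phi F.
Proof.
  induction phi as [X r args|X s t u|X p IH|X p IHp q IHq|X s p IH].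
  - destruct (family_transports args (fun i => term_transport (args i))) as [F HF].
    exists F. intros Y k Hk. destruct (HF Y k Hk) as [args' Hargs'].
    exists (frel r args'). intros envY envX Ha. simpl. rewrite (Hargs' _ _ Ha). tauto.
  - destruct (term_transport t) as [Ft Ht], (term_transport u) as [Fu Hu].
    exists (Ft ++ Fu). intros Y k Hk.
    assert (It : incl Ft (Ft ++ Fu)) by apply incl_appl, incl_refl.
    assert (Iu : incl Fu (Ft ++ Fu)) by apply incl_appr, incl_refl.
    destruct (Ht Y k (defined_on_incl It Hk)) as [t' Ht'].
    destruct (Hu Y k (defined_on_incl Iu Hk)) as [u' Hu'].
    exists (feq t' u'). intros envY envX Ha. simpl.
    rewrite (Ht' envY envX), (Hu' envY envX) by eauto using agree_on_incl. tauto.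
  - destruct IH as [F HF]. exists F. intros Y k Hk. destruct (HF Y k Hk) as [p' Hp'].
    exists (fneg p'). intros envY envX Ha. simpl. rewrite (Hp' _ _ Ha). tauto.
  - destruct IHp as [Fp HFp], IHq as [Fq HFq]. exists (Fp ++ Fq). intros Y k Hk.
    assert (Ip : incl Fp (Fp ++ Fq)) by apply incl_appl, incl_refl.
    assert (Iq : incl Fq (Fp ++ Fq)) by apply incl_appr, incl_refl.
    destruct (HFp Y k (defined_on_incl Ip Hk)) as [p' Hp'].
    destruct (HFq Y k (defined_on_incl Iq Hk)) as [q' Hq'].
    exists (fand p' q'). intros envY envX Ha. simpl.
    rewrite (Hp' envY envX), (Hq' envY envX) by eauto using agree_on_incl. tauto.
  - destruct IH as [F HF]. exists (flat_map proj_inl F). intros Y k Hk.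
    assert (Hin : forall s' x, In (existT _ s' (inl x)) F -> In (existT _ s' x) (flat_map proj_inl F)).
    { intros s' x Hx. apply in_flat_map. exists (existT _ s' (inl x)). simpl; auto. }
    destruct (HF (ext Y s) (ext_lift_partial s k)) as [p' Hp'].
    { intros s' [x|e] Hx; simpl; [|congruence].
      destruct (k s' x) eqn:E; simpl; [congruence|]. exfalso. exact (Hk s' x (Hin s' x Hx) E). }
    exists (fex s p'). intros envY envX Ha. simpl.
    assert (Hm : forall m, agree_on (ext_lift_partial s k) F (extend envX m) (extend envY m)).
    { intros m s' [x|e] y Hx Hky; simpl in Hky.
      - destruct (k s' x) as [y0|] eqn:E; simpl in Hky; inversion Hky; subst; simpl.
        exact (Ha s' x y0 (Hin s' x Hx) E).
      - inversion Hky; subst; reflexivity. }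
    split; intros [m Hsat]; exists m; [rewrite <- (Hp' _ _ (Hm m)) | rewrite (Hp' _ _ (Hm m))];
      exact Hsat.
Qed.

Lemma sat_finite_support {X} (phi : formula X) : exists F : list {s & X s},
  forall env1 env2 : forall s, X s -> carrier M s,
  (forall s x, In (existT _ s x) F -> env1 s x = env2 s x) -> (sat phi env1 <-> sat phi env2).
Proof.
  destruct (formula_transport phi) as [F HF]. exists F. intros env1 env2 H.
  destruct (HF X (fun s x => Some x)) as [p' Hp']; [intros s x _; congruence|].
  rewrite <- (Hp' env1 env1), (Hp' env1 env2); [tauto| |];
    intros s x y Hx Hk; inversion Hk; subst; auto. symmetry; auto.
Qed.

Lemma sat_finite_support_list {X} (D : list (formula X)) : exists F : list {s & X s},
  forall phi, In phi D -> forall env1 env2 : forall s, X s -> carrier M s,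
  (forall s x, In (existT _ s x) F -> env1 s x = env2 s x) -> (sat phi env1 <-> sat phi env2).
Proof.
  induction D as [|phi D [F HF]]; [exists []; simpl; tauto|].
  destruct (sat_finite_support phi) as [F1 HF1]. exists (F1 ++ F).
  intros psi [<-|Hpsi] e1 e2 H; [apply HF1 | apply HF; auto];
    intros; apply H, in_or_app; auto.
Qed.

(** * Existential projection *)

Definition compatible {Z W : sort L -> Type} (k : forall s, Z s -> option (W s))
  (envZ : forall s, Z s -> carrier M s) (envW : forall s, W s -> carrier M s) :=
  forall s z w, k s z = Some w -> envZ s z = envW s w.

Definition projects {Z W : sort L -> Type} (k : forall s, Z s -> option (W s))
  (phi : formula Z) (theta : formula W) :=
  forall envW, sat theta envW <-> exists envZ, compatible k envZ envW /\ sat phi envZ.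

Lemma projects_total {Z W : sort L -> Type} (k : forall s, Z s -> option (W s)) (phi : formula Z) :
  (forall s z, k s z <> None) -> exists theta, projects k phi theta.
Proof.
  intro Hk.
  destruct (dependent_choice (sort L) (fun s => Z s -> W s)
    (fun s f => forall z, k s z = Some (f z))) as [f Hf].
  { intro s. apply (choice (fun z w => k s z = Some w)). intro z.
    destruct (k s z) as [w|] eqn:E; [eauto | destruct (Hk s z E)]. }
  exists (formula_rename phi W f). intro envW. rewrite sat_rename. split.
  - intro H. exists (fun s x => envW s (f s x)). split; auto.
    intros s z w E. rewrite Hf in E. inversion E; auto.
  - intros [envZ [Ha Hs]].
    replace (fun s x => envW s (f s x)) with envZ; auto.
    apply functional_extensionality_dep; intro s; apply functional_extensionality; intro z.
    apply Ha, Hf.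
Qed.

(* Quantify out, one at a time, the finitely many variables outside the domain of [k]. *)
Lemma exists_projection {Z} (phi : formula Z) (G : list {s & Z s}) :
  forall W (k : forall s, Z s -> option (W s)),
  (forall s z, k s z = None -> In (existT _ s z) G) -> exists theta, projects k phi theta.
Proof.
  induction G as [|[s1 z1] G IH]; intros W k Hk.
  - apply projects_total. intros s z E. destruct (Hk s z E).
  - set (is_z1 := fun s (z : Z s) => exists e : s1 = s, eq_rect s1 Z z1 s e = z).
    set (k1 := fun s (z : Z s) => match k s z with
       | Some w => Some (inl w)
       | None => match excluded_middle_informative (is_z1 s z) with
                 | left h => Some (inr (proj1_sig (constructive_indefinite_description _ h))
                                   : ext W s1 s)
                 | right _ => None
                 end
       end).
    destruct (IH (ext W s1) k1) as [th Hth].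
    { intros s z E. unfold k1 in E. destruct (k s z) eqn:E1; [discriminate|].
      destruct (excluded_middle_informative _) as [h|h]; [discriminate|].
      destruct (Hk s z E1) as [E2|E2]; auto.
      exfalso. apply h. exists (projT1_eq E2). apply (projT2_eq E2). }
    exists (fex s1 th). intro envW. simpl. split.
    + intros [m Hm]. apply Hth in Hm. destruct Hm as [envZ [Ha Hs]].
      exists envZ. split; auto. intros s z w E. apply (Ha s z (inl w)). unfold k1. rewrite E. auto.
    + intros [envZ [Ha Hs]]. exists (envZ s1 z1). apply Hth. exists envZ. split; auto.
      intros s z w E. unfold k1 in E. destruct (k s z) as [w0|] eqn:E1.
      * inversion E; subst. simpl. auto.
      * destruct (excluded_middle_informative _) as [h|h]; [|discriminate].
        inversion E; subst. simpl.
        destruct (constructive_indefinite_description _ h) as [e He]. simpl.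
        subst z. destruct e. reflexivity.
Qed.

End Syntax.

Arguments term_rename {L X Y} f {s} t.
Arguments formula_rename {L X} phi Y f.
Arguments big_and {L X} phi D.
Arguments ftrue {L X} s x.
Arguments fverum {L X} phi.
Arguments defined_on {L X Y} k F.
Arguments agree_on {L M X Y} k F envX envY.
Arguments compatible {L M Z W} k envZ envW.
Arguments projects {L M Z W} k phi theta.

Section BourbakiWitt.
Variable T : Type.
Variable le : T -> T -> Prop.
Hypothesis le_refl : forall x, le x x.
Hypothesis le_trans : forall x y z, le x y -> le y z -> le x z.
Hypothesis le_anti : forall x y, le x y -> le y x -> x = y.
Variable S : T -> Prop.

Definition chain (C : T -> Prop) := forall x y, C x -> C y -> le x y \/ le y x.

Variable sup : (T -> Prop) -> T.
Hypothesis sup_ub :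
  forall C, (forall x, C x -> S x) -> chain C -> forall x, C x -> le x (sup C).
Hypothesis sup_least :
  forall C, (forall x, C x -> S x) -> chain C -> forall u, (forall x, C x -> le x u) -> le (sup C) u.
Hypothesis sup_S : forall C, (forall x, C x -> S x) -> chain C -> S (sup C).
Variable f : T -> T.
Hypothesis f_S : forall x, S x -> S (f x).
Hypothesis f_infl : forall x, S x -> le x (f x).

Definition tower (x : T) := forall P : T -> Prop, (forall y, P y -> P (f y)) ->
  (forall C, (forall y, C y -> P y) -> chain C -> P (sup C)) -> P x.

Lemma tower_f x : tower x -> tower (f x).
Proof. intros H P Hf Hs. apply Hf, H; auto. Qed.

Lemma tower_sup C : (forall y, C y -> tower y) -> chain C -> tower (sup C).
Proof. intros H Hc P Hf Hs. apply Hs; auto. intros y Hy. apply H; auto. Qed.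

Lemma tower_S x : tower x -> S x.
Proof. intro H. apply H; auto. Qed.

Definition extreme c := tower c /\ forall x, tower x -> le x c -> x <> c -> le (f x) c.

Lemma extreme_split c : extreme c -> forall x, tower x -> le x c \/ le (f c) x.
Proof.
  intros [Tc Ec] x Tx.
  enough (tower x /\ (le x c \/ le (f c) x)) by tauto.
  apply Tx.
  - intros y [Ty [H|H]]; split; [now apply tower_f| |now apply tower_f|].
    + destruct (classic (y = c)) as [->|Hne]; [right; auto|left; auto].
    + right. apply le_trans with y; auto. apply f_infl, tower_S; auto.
  - intros C HC Hch. split; [apply tower_sup; auto; intros y Hy; apply HC; auto|].
    assert (CS : forall z, C z -> S z) by (intros z Hz; apply tower_S, HC; auto).
    destruct (classic (exists y, C y /\ ~ le y c)) as [[y [Cy Hy]]|Hn].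
    + right. destruct (HC y Cy) as [_ [H|H]]; [contradiction|].
      apply le_trans with y; auto.
    + left. apply sup_least; auto.
      intros z Hz. apply NNPP; intro H; apply Hn; eauto.
Qed.

Lemma tower_extreme c0 : tower c0 -> extreme c0.
Proof.
  intro Tc0. apply Tc0.
  - intros y Ey. split; [apply tower_f, Ey|]. intros x Tx Hx Hne.
    destruct (extreme_split y Ey x Tx) as [H|H].
    + destruct (classic (x = y)) as [->|Hne']; auto.
      apply le_trans with y; [apply Ey; auto | apply f_infl, tower_S, Ey].
    + exfalso; apply Hne; apply le_anti; auto.
  - intros C HC Hch.
    assert (CS : forall z, C z -> S z) by (intros z Hz; apply tower_S, HC; auto).
    split; [apply tower_sup; auto; intros z Hz; apply HC; auto|].
    intros x Tx Hx Hne.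
    destruct (classic (exists c, C c /\ ~ le (f c) x)) as [[c [Cc Hc]]|Hn].
    + destruct (extreme_split c (HC c Cc) x Tx) as [H|H]; [|contradiction].
      destruct (classic (x = c)) as [->|Hne'].
      * destruct (classic (exists c', C c' /\ ~ le c' c)) as [[c' [Cc' Hc']]|Hn'].
        -- destruct (extreme_split c' (HC c' Cc') c (proj1 (HC c Cc))) as [H'|H'].
           ++ apply le_trans with c'; [|apply sup_ub; auto].
              apply (proj2 (HC c' Cc')); [apply (proj1 (HC c Cc))|exact H'|].
              intro E; subst; apply Hc'; auto.
           ++ exfalso; apply Hc'. apply le_trans with (f c'); auto.
        -- exfalso; apply Hne. apply le_anti; auto. apply sup_least; auto.
           intros z Hz; apply NNPP; intro H'; apply Hn'; eauto.
      * apply le_trans with c; [apply (proj2 (HC c Cc)); auto | apply sup_ub; auto].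
    + exfalso; apply Hne. apply le_anti; auto. apply sup_least; auto.
      intros z Hz. apply le_trans with (f z); [apply f_infl, CS; auto|].
      apply NNPP; intro H'; apply Hn; eauto.
Qed.

Lemma tower_chain : chain tower.
Proof.
  intros x c Tx Tc. destruct (extreme_split c (tower_extreme c Tc) x Tx) as [H|H]; auto.
  right. apply le_trans with (f c); auto. apply f_infl, tower_S; auto.
Qed.

(* The supremum of the tower is a fixed point. *)
Theorem bourbaki_witt : exists x, S x /\ f x = x.
Proof.
  assert (Ts : tower (sup tower)) by (apply tower_sup; auto; apply tower_chain).
  exists (sup tower). split; [apply tower_S; auto|]. apply le_anti.
  - apply sup_ub; [apply tower_S | apply tower_chain | apply tower_f; auto].
  - apply f_infl, tower_S; auto.
Qed.
End BourbakiWitt.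

Arguments chain {T} le C.

Section PartialMaps.
Variables (U : Type) (F : U -> Type).

Definition pmap := forall u, option (F u).

Definition pmap_le (c d : pmap) := forall u y, c u = Some y -> d u = Some y.

Definition pmap_sup (C : pmap -> Prop) : pmap := fun u =>
  match excluded_middle_informative (exists y c, C c /\ c u = Some y) with
  | left h => Some (proj1_sig (constructive_indefinite_description _ h))
  | right _ => None
  end.

Lemma pmap_le_antisym c d : pmap_le c d -> pmap_le d c -> c = d.
Proof.
  intros H1 H2. apply functional_extensionality_dep; intro u.
  destruct (c u) as [y|] eqn:E1; [symmetry; apply H1; auto|].
  destruct (d u) as [y|] eqn:E2; auto. rewrite (H2 _ _ E2) in E1; discriminate.
Qed.

Lemma pmap_sup_Some C u y : pmap_sup C u = Some y -> exists c, C c /\ c u = Some y.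
Proof.
  unfold pmap_sup. destruct (excluded_middle_informative _) as [h|h]; [|discriminate].
  destruct (constructive_indefinite_description _ h) as [y' Hy']. simpl.
  intro E. inversion E; subst; auto.
Qed.

Lemma pmap_sup_ub C : chain pmap_le C -> forall c, C c -> pmap_le c (pmap_sup C).
Proof.
  intros Hch c Cc u y E. unfold pmap_sup. destruct (excluded_middle_informative _) as [h|h].
  - destruct (constructive_indefinite_description _ h) as [y' [c' [Cc' E']]]. simpl. f_equal.
    destruct (Hch c c' Cc Cc') as [H|H].
    + rewrite (H _ _ E) in E'. inversion E'; auto.
    + rewrite (H _ _ E') in E. inversion E; auto.
  - exfalso; apply h; eauto.
Qed.

Lemma pmap_sup_least C d : (forall c, C c -> pmap_le c d) -> pmap_le (pmap_sup C) d.
Proof. intros Hd u y E. destruct (pmap_sup_Some C u y E) as [c [Cc Ec]]. apply (Hd c); auto. Qed.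

Lemma pmap_sup_finite C (us : list U) : chain pmap_le C ->
  exists d, (d = (fun _ => None) \/ C d) /\
    forall u, In u us -> pmap_sup C u <> None -> d u = pmap_sup C u.
Proof.
  intro Hch. induction us as [|u us [d [Hd Hus]]].
  - exists (fun _ => None). split; auto. intros u [].
  - destruct (pmap_sup C u) as [y|] eqn:Eu.
    2:{ exists d. split; auto. intros u' [<-|Hu'] Hn; [congruence | auto]. }
    destruct (pmap_sup_Some C u y Eu) as [c [Cc Ec]].
    destruct Hd as [->|Cd].
    + exists c. split; auto. intros u' [<-|Hu'] Hn; [congruence|].
      specialize (Hus u' Hu' Hn). congruence.
    + destruct (Hch d c Cd Cc) as [H|H].
      * exists c. split; auto. intros u' [<-|Hu'] Hn; [congruence|].
        specialize (Hus u' Hu' Hn). destruct (pmap_sup C u') as [y'|]; [|congruence]. apply H; auto.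
      * exists d. split; auto. intros u' [<-|Hu'] Hn; auto. rewrite Eu. apply H; auto.
Qed.

(* Zorn's lemma for partial maps; the empty chain forces [S] to contain the empty map. *)
Theorem pmap_maximal (S : pmap -> Prop) :
  (forall C, (forall c, C c -> S c) -> chain pmap_le C -> S (pmap_sup C)) ->
  exists c, S c /\ forall d, S d -> pmap_le c d -> d = c.
Proof.
  intro HS.
  set (bigger := fun c d => S d /\ pmap_le c d /\ d <> c).
  set (next := fun c => match excluded_middle_informative (exists d, bigger c d) with
     | left h => proj1_sig (constructive_indefinite_description _ h)
     | right _ => c end).
  assert (Hnext : forall c, (exists d, bigger c d) -> bigger c (next c)).
  { intros c h. unfold next. destruct (excluded_middle_informative _) as [h'|h']; [|contradiction].
    exact (proj2_sig (constructive_indefinite_description _ h')). }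
  destruct (bourbaki_witt pmap pmap_le (fun c u y E => E) (fun c d e H1 H2 u y E => H2 _ _ (H1 _ _ E))
    pmap_le_antisym S pmap_sup (fun C _ => pmap_sup_ub C) (fun C _ _ => pmap_sup_least C) HS next)
    as [c [Sc Hc]].
  - intros c Sc. unfold next. destruct (excluded_middle_informative _) as [h|h]; auto.
    exact (proj1 (proj2_sig (constructive_indefinite_description _ h))).
  - intros c Sc. unfold next. destruct (excluded_middle_informative _) as [h|h]; [|intros u y E; auto].
    exact (proj1 (proj2 (proj2_sig (constructive_indefinite_description _ h)))).
  - exists c. split; auto. intros d Sd Hcd. apply NNPP; intro Hne.
    destruct (Hnext c (ex_intro _ d (conj Sd (conj Hcd Hne)))) as [_ [_ H]]. contradiction.
Qed.
End PartialMaps.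

Arguments pmap {U} F.
Arguments pmap_le {U F} c d.
Arguments pmap_sup {U F} C u.

Definition inj (A B : Type) := exists f : A -> B, forall x y, f x = f y -> x = y.

Lemma inj_refl A : inj A A.
Proof. exists (fun x => x); auto. Qed.

Lemma inj_trans A B C : inj A B -> inj B C -> inj A C.
Proof. intros [f Hf] [g Hg]. exists (fun x => g (f x)); auto. Qed.

Lemma inj_sum A A' B B' : inj A A' -> inj B B' -> inj (A + B) (A' + B').
Proof.
  intros [f Hf] [g Hg]. exists (fun u => match u with inl a => inl (f a) | inr b => inr (g b) end).
  intros [a|b] [a'|b'] E; inversion E; f_equal; auto.
Qed.

Lemma inverse_option {A B} (e : A -> B) : (forall x y, e x = e y -> x = y) ->
  exists g : B -> option A, forall y k, g y = Some k <-> e k = y.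
Proof.
  intro He.
  exists (fun y => match excluded_middle_informative (exists k, e k = y) with
    | left q => Some (proj1_sig (constructive_indefinite_description _ q)) | right _ => None end).
  intros y k. destruct (excluded_middle_informative _) as [q|q].
  - destruct (constructive_indefinite_description _ q) as [k' Hk']. simpl. split; intro E.
    + inversion E; subst; auto.
    + f_equal. apply He. congruence.
  - split; intro E; [discriminate|]. exfalso; apply q; eauto.
Qed.

Definition pos_of {X} (l : list X) (x : X) : nat :=
  match excluded_middle_informative (exists k, nth_error l k = Some x) with
  | left h => proj1_sig (constructive_indefinite_description _ h)
  | right _ => 0
  end.

Lemma pos_of_spec {X} (l : list X) x : In x l -> nth_error l (pos_of l x) = Some x.
Proof.
  intro H. unfold pos_of. destruct (excluded_middle_informative _) as [h|h].
  - exact (proj2_sig (constructive_indefinite_description _ h)).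
  - exfalso; apply h. apply In_nth_error; auto.
Qed.

Lemma pos_of_lt {X} (l : list X) x : In x l -> pos_of l x < length l.
Proof. intro H. apply nth_error_Some. rewrite pos_of_spec; auto; discriminate. Qed.

Lemma pos_of_inj {X} (l : list X) x y : In x l -> In y l -> pos_of l x = pos_of l y -> x = y.
Proof. intros Hx Hy E. apply pos_of_spec in Hx, Hy. rewrite E in Hx. congruence. Qed.

Lemma inj_nat_of_listed {X T} (F : list T) (f : X -> T) :
  (forall x y, f x = f y -> x = y) -> (forall x, In (f x) F) -> inj X nat.
Proof. intros Hf HF. exists (fun x => pos_of F (f x)). intros x y E. apply Hf, (pos_of_inj F); auto. Qed.

Definition listable X := exists l : list X, forall x, In x l.

Lemma listable_inj_nat X : listable X -> inj X nat.
Proof. intros [l Hl]. exact (inj_nat_of_listed l (fun x => x) (fun x y E => E) Hl). Qed.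

(* Otherwise picking fresh elements again and again gives an injection of [nat]. *)
Lemma listable_of_not_inj_nat X : ~ inj nat X -> listable X.
Proof.
  intro HD. apply NNPP; intro HL.
  assert (H : forall l : list X, exists x, ~ In x l).
  { intro l. apply NNPP; intro H. apply HL. exists l. intro x. apply NNPP; intro H'. apply H; eauto. }
  destruct (choice _ H) as [fresh Hfresh].
  set (sq := fix sq n := match n with 0 => [] | S n => fresh (sq n) :: sq n end).
  assert (Hin : forall m n, m < n -> In (fresh (sq m)) (sq n)).
  { intros m n; induction n; intro Hmn; [lia|]. simpl.
    destruct (Nat.eq_dec m n) as [->|Hne]; [left; auto|right; apply IHn; lia]. }
  apply HD. exists (fun n => fresh (sq n)). intros m n E.
  destruct (lt_eq_lt_dec m n) as [[H1|H1]|H1]; auto; exfalso.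
  - apply (Hfresh (sq n)). rewrite <- E. apply Hin; auto.
  - apply (Hfresh (sq m)). rewrite E. apply Hin; auto.
Qed.

Lemma inj_nat_sum_nat : inj (nat + nat) nat.
Proof.
  exists (fun u => match u with inl a => 2 * a | inr b => 2 * b + 1 end).
  intros [a|b] [a'|b'] E; f_equal; lia.
Qed.

Lemma inj_idx_prod_nat N A : inj A nat -> inj (idx N * A) nat.
Proof.
  intros [g Hg]. exists (fun p => proj1_sig (fst p) + N * g (snd p)).
  intros [[k hk] a] [[k' hk'] a'] E; simpl in E.
  assert (k = k' /\ g a = g a') as [-> E2].
  { assert (H1 : (k + N * g a) mod N = k)
      by (rewrite Nat.mul_comm, Nat.Div0.mod_add; apply Nat.mod_small; auto).
    assert (H2 : (k' + N * g a') mod N = k')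
      by (rewrite Nat.mul_comm, Nat.Div0.mod_add; apply Nat.mod_small; auto).
    assert (k = k') by congruence. subst. split; auto. nia. }
  apply Hg in E2. subst. repeat f_equal. apply proof_irrelevance.
Qed.

(** * Dedekind-infinite types absorb their double *)

Section Double.
Variable X : Type.
Variable e0 : nat -> X.
Hypothesis e0_inj : forall a b, e0 a = e0 b -> a = b.

Definition half_embedding (h : pmap (fun _ : X + X => X)) :=
  (forall u u' y, h u = Some y -> h u' = Some y -> u = u') /\
  (forall x, h (inl x) = None <-> h (inr x) = None) /\
  (forall u y, h u = Some y -> h (inl y) <> None).

Lemma half_embedding_chain_sup C : (forall h, C h -> half_embedding h) -> chain pmap_le C ->
  half_embedding (pmap_sup C).
Proof.
  intros HS Hch.
  assert (Hsome : forall u y, pmap_sup C u = Some y -> exists c, C c /\ c u = Some y)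
    by apply pmap_sup_Some.
  assert (Hub : forall c u y, C c -> c u = Some y -> pmap_sup C u = Some y)
    by (intros c u y Cc; apply (pmap_sup_ub _ _ C Hch c Cc)).
  split; [|split].
  - intros u u' y E E'. destruct (Hsome u y E) as [c [Cc Ec]], (Hsome u' y E') as [c' [Cc' Ec']].
    destruct (Hch c c' Cc Cc') as [H|H];
      [apply (proj1 (HS c' Cc') u u' y) | apply (proj1 (HS c Cc) u u' y)]; auto.
  - intro x. split; intro E.
    + destruct (pmap_sup C (inr x)) as [y|] eqn:E'; auto. destruct (Hsome _ y E') as [c [Cc Ec]].
      destruct (c (inl x)) as [y'|] eqn:E2; [rewrite (Hub c _ _ Cc E2) in E; discriminate|].
      apply (proj1 (proj2 (HS c Cc)) x) in E2. congruence.
    + destruct (pmap_sup C (inl x)) as [y|] eqn:E'; auto. destruct (Hsome _ y E') as [c [Cc Ec]].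
      destruct (c (inr x)) as [y'|] eqn:E2; [rewrite (Hub c _ _ Cc E2) in E; discriminate|].
      apply (proj1 (proj2 (HS c Cc)) x) in E2. congruence.
  - intros u y E. destruct (Hsome u y E) as [c [Cc Ec]].
    apply (proj2 (proj2 (HS c Cc))) in Ec. destruct (c (inl y)) as [y'|] eqn:E2; [|congruence].
    rewrite (Hub c _ _ Cc E2). discriminate.
Qed.

(* A sequence [e] outside the domain absorbs two new copies of itself:
   [e k |-> e (2k), e (2k+1)]. *)
Lemma half_embedding_extend h (e : nat -> X) : half_embedding h ->
  (forall a b, e a = e b -> a = b) -> (forall k, h (inl (e k)) = None) ->
  exists h', half_embedding h' /\ pmap_le h h' /\ h' (inl (e 0)) <> None.
Proof.
  intros [Hi [Hd Him]] He Hn.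
  destruct (inverse_option e He) as [kof Hkof].
  set (h' := fun u => match h u with Some y => Some y | None =>
     match u with inl x => option_map (fun k => e (2 * k)) (kof x)
                | inr x => option_map (fun k => e (2 * k + 1)) (kof x) end end).
  assert (Hnew : forall u y, h u = None -> h' u = Some y -> exists j, y = e j).
  { intros u y E1 E2. unfold h' in E2. rewrite E1 in E2.
    destruct u as [x|x]; destruct (kof x) as [k|]; simpl in E2; inversion E2; subst; eauto. }
  exists h'. split; [split; [|split]|split].
  - intros u u' y E E'. unfold h' in E, E'.
    destruct (h u) as [y1|] eqn:E1; destruct (h u') as [y2|] eqn:E2.
    + inversion E; inversion E'; subst. apply (Hi u u' y); auto.
    + exfalso. inversion E; subst y1. destruct (Hnew u' y E2) as [j ->]; [unfold h'; rewrite E2; auto|].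
      apply (Him u (e j)); auto.
    + exfalso. inversion E'; subst y2. destruct (Hnew u y E1) as [j ->]; [unfold h'; rewrite E1; auto|].
      apply (Him u' (e j)); auto.
    + destruct u as [x|x]; destruct u' as [x'|x'];
        destruct (kof x) as [k|] eqn:K1; destruct (kof x') as [k'|] eqn:K2;
        simpl in E, E'; try discriminate; inversion E; inversion E'; subst;
        apply Hkof in K1; apply Hkof in K2; subst;
        match goal with H : e ?a = e ?b |- _ => apply He in H end; repeat f_equal; lia.
  - intro x. unfold h'. split; intro E.
    + destruct (h (inl x)) eqn:E1; [discriminate|]. rewrite (proj1 (Hd x) E1).
      destruct (kof x); simpl in *; congruence.
    + destruct (h (inr x)) eqn:E1; [discriminate|]. rewrite (proj2 (Hd x) E1).
      destruct (kof x); simpl in *; congruence.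
  - intros u y E. destruct (h u) as [y1|] eqn:E1.
    + unfold h' in E. rewrite E1 in E. inversion E; subst. unfold h'.
      destruct (h (inl y)) eqn:E3; [discriminate|]. exfalso; apply (Him u y); auto.
    + destruct (Hnew u y E1 E) as [j ->]. unfold h'. rewrite Hn.
      rewrite (proj2 (Hkof (e j) j) eq_refl). discriminate.
  - intros u y E. unfold h'. rewrite E. auto.
  - unfold h'. rewrite Hn, (proj2 (Hkof (e 0) 0) eq_refl). discriminate.
Qed.

Lemma half_embedding_cofinite : exists h, half_embedding h /\ listable {x | h (inl x) = None}.
Proof.
  destruct (pmap_maximal _ _ half_embedding half_embedding_chain_sup) as [h [Sh Hmax]].
  exists h. split; auto. apply listable_of_not_inj_nat. intros [g Hg].
  destruct (half_embedding_extend h (fun n => proj1_sig (g n)) Sh) as [h' [Sh' [Hle Hne]]].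
  - intros a b E. apply Hg, eq_sig_hprop; auto. intros; apply proof_irrelevance.
  - intro k. exact (proj2_sig (g k)).
  - rewrite (Hmax h' Sh' Hle) in Hne. apply Hne, (proj2_sig (g 0)).
Qed.

(* Hilbert's hotel: shifting along [e0] frees its first [N] values. *)
Lemma hotel_shift N : exists f : X -> X, (forall y y', f y = f y' -> y = y') /\
  forall y j, j < N -> f y <> e0 j.
Proof.
  destruct (inverse_option e0 e0_inj) as [kof Hkof].
  exists (fun y => match kof y with Some k => e0 (k + N) | None => y end). split.
  - intros y y'. destruct (kof y) as [k|] eqn:K1; destruct (kof y') as [k'|] eqn:K2; intro E; auto.
    + apply e0_inj in E. apply Hkof in K1, K2. subst. f_equal. lia.
    + subst. assert (kof (e0 (k + N)) = Some (k + N)) by (apply Hkof; auto). congruence.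
    + subst. assert (kof (e0 (k' + N)) = Some (k' + N)) by (apply Hkof; auto). congruence.
  - intros y j Hj. destruct (kof y) as [k|] eqn:K1; intro E.
    + apply e0_inj in E. lia.
    + subst. assert (kof (e0 j) = Some j) by (apply Hkof; auto). congruence.
Qed.

(* Shift the values of a maximal half embedding out of the way and place the finitely many
   remaining points of [X + X] on the first values of [e0]. *)
Lemma double : inj (X + X) X.
Proof.
  destruct half_embedding_cofinite as [h [[Hi [Hd _]] [Lr HLr]]].
  set (Lx := map (@proj1_sig _ _) Lr).
  assert (HLx : forall x, h (inl x) = None -> In x Lx).
  { intros x Hx. change x with (proj1_sig (exist (fun x => h (inl x) = None) x Hx)).
    apply in_map; auto. }
  destruct (hotel_shift (2 * length Lx)) as [f [Hf Hfe]].
  set (bit := fun u : X + X => match u with inl _ => 0 | inr _ => 1 end).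
  set (base := fun u : X + X => match u with inl x => x | inr x => x end).
  exists (fun u => match h u with Some y => f y | None => e0 (2 * pos_of Lx (base u) + bit u) end).
  assert (Hdom : forall u, h u = None -> In (base u) Lx).
  { intros [x|x] E; simpl; apply HLx; auto. apply (proj2 (Hd x)); auto. }
  assert (Hlt : forall u, h u = None -> 2 * pos_of Lx (base u) + bit u < 2 * length Lx).
  { intros u E. pose proof (pos_of_lt Lx _ (Hdom u E)). destruct u; simpl in *; lia. }
  intros u u' E. destruct (h u) as [y|] eqn:E1; destruct (h u') as [y'|] eqn:E2.
  - apply Hf in E. subst. apply (Hi u u' y'); auto.
  - exfalso. apply (Hfe y _ (Hlt u' E2)); auto.
  - exfalso. apply (Hfe y' _ (Hlt u E1)); auto.
  - apply e0_inj in E. assert (bit u = bit u' /\ pos_of Lx (base u) = pos_of Lx (base u')) as [B1 B2].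
    { destruct u, u'; simpl in *; split; lia. }
    apply pos_of_inj in B2; try apply Hdom; auto.
    destruct u, u'; simpl in *; try discriminate; subst; auto.
Qed.
End Double.

Lemma idx_succ_prod N I : inj (idx (S N) * I) (I + idx N * I).
Proof.
  exists (fun p => match lt_dec (proj1_sig (fst p)) N with
           | left h' => inr (exist _ (proj1_sig (fst p)) h', snd p)
           | right _ => inl (snd p) end).
  intros [[k hk] i] [[k' hk'] i']; simpl.
  destruct (lt_dec k N) as [h1|h1]; destruct (lt_dec k' N) as [h2|h2]; intro E; inversion E; subst.
  - repeat f_equal. apply proof_irrelevance.
  - assert (k = k') by lia. subst. repeat f_equal. apply proof_irrelevance.
Qed.

Lemma inj_idx_prod N I : inj nat I -> inj (idx N * I) I.
Proof.
  intros [e0 He0]. induction N.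
  - exists snd. intros [[k hk] i]; lia.
  - eapply inj_trans; [apply idx_succ_prod|]. eapply inj_trans; [apply inj_sum; [apply inj_refl|apply IHN]|].
    apply (double I e0 He0).
Qed.

(** * Types bounded by finitely many copies of [I] and [nat] *)

Definition bounded_by (I Z : Type) := exists N, inj Z (idx N * I + nat).

(* No comparability of cardinals is needed: [I] is either Dedekind-infinite, and then absorbs
   [idx N * I + nat], or finite. *)
Lemma small_of_bounded K A I Z : small K (A + nat) -> small K I -> bounded_by I Z -> small K Z.
Proof.
  intros [hK1 hK2] [hI1 hI2] [N HZ].
  assert (natK : inj nat K).
  { eapply inj_trans; [|exact hK1]. exists inr; intros x y E; inversion E; auto. }
  assert (notKnat : ~ inj K nat).
  { intro H; apply hK2; eapply inj_trans; [exact H|]. exists inr; intros x y E; inversion E; auto. }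
  destruct (classic (inj nat I)) as [[e0 He0]|nDI].
  - assert (ZI : inj Z I).
    { eapply inj_trans; [exact HZ|]. eapply inj_trans.
      - apply inj_sum; [apply inj_idx_prod; exists e0; exact He0 | exists e0; exact He0].
      - apply (double I e0 He0). }
    split; [eapply inj_trans; eauto|]. intro H. apply hI2. eapply inj_trans; eauto.
  - assert (Inat : inj I nat) by (apply listable_inj_nat, listable_of_not_inj_nat; auto).
    assert (Znat : inj Z nat).
    { eapply inj_trans; [exact HZ|]. eapply inj_trans; [|apply inj_nat_sum_nat].
      apply inj_sum; [apply inj_idx_prod_nat; auto | apply inj_refl]. }
    split; [eapply inj_trans; eauto|]. intro H. apply notKnat. eapply inj_trans; eauto.
Qed.

Lemma bounded_inj I Z Z' : inj Z Z' -> bounded_by I Z' -> bounded_by I Z.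
Proof. intros H [N HN]. exists N. eapply inj_trans; eauto. Qed.

Lemma bounded_nat I Z : inj Z nat -> bounded_by I Z.
Proof. intros [f Hf]. exists 0. exists (fun x => inr (f x)). intros x y E; inversion E; auto. Qed.

Lemma bounded_idx_prod I Z N : inj Z (idx N * I) -> bounded_by I Z.
Proof. intros [f Hf]. exists N. exists (fun x => inl (f x)). intros x y E; inversion E; auto. Qed.

Lemma bounded_sum I X Y : bounded_by I X -> bounded_by I Y -> bounded_by I (X + Y).
Proof.
  intros [a [f Hf]] [b [g Hg]]. exists (a + b).
  set (widen := fun k : idx a => exist (fun j => j < a + b) (proj1_sig k) (ltac:(destruct k; simpl; lia))).
  set (shift := fun k : idx b => exist (fun j => j < a + b) (a + proj1_sig k) (ltac:(destruct k; simpl; lia))).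
  exists (fun u => match u with
    | inl x => match f x with inl (k, i) => inl (widen k, i) | inr m => inr (2 * m) end
    | inr y => match g y with inl (k, i) => inl (shift k, i) | inr m => inr (2 * m + 1) end end).
  intros [x|y] [x'|y']; simpl;
    [destruct (f x) as [[[k hk] i]|m] eqn:E1; destruct (f x') as [[[k' hk'] i']|m'] eqn:E2
    |destruct (f x) as [[[k hk] i]|m] eqn:E1; destruct (g y') as [[[k' hk'] i']|m'] eqn:E2
    |destruct (g y) as [[[k hk] i]|m] eqn:E1; destruct (f x') as [[[k' hk'] i']|m'] eqn:E2
    |destruct (g y) as [[[k hk] i]|m] eqn:E1; destruct (g y') as [[[k' hk'] i']|m'] eqn:E2];
    intro E; inversion E; subst; try lia; f_equal;
    [apply Hf | apply Hf | apply Hg | apply Hg]; rewrite E1, E2; repeat f_equal;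
    try lia; try apply proof_irrelevance.
  assert (k = k') by lia. subst. f_equal. apply proof_irrelevance.
Qed.

Lemma inj_sigma_sum {S : Type} (A B : S -> Type) :
  inj {s & (A s + B s)%type} ({s & A s} + {s & B s}).
Proof.
  exists (fun p => match p with existT _ s (inl x) => inl (existT _ s x)
                            | existT _ s (inr y) => inr (existT _ s y) end).
  intros [s [x|y]] [s' [x'|y']] E; inversion E; subst; auto; congruence.
Qed.

Lemma bounded_sigma_sum {S : Type} I (A B : S -> Type) :
  bounded_by I {s & A s} -> bounded_by I {s & B s} -> bounded_by I {s & (A s + B s)%type}.
Proof. intros HA HB. eapply bounded_inj; [apply inj_sigma_sum | apply bounded_sum; auto]. Qed.

Lemma bounded_of_inj I Z : inj Z I -> bounded_by I Z.
Proof.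
  intros [f Hf]. apply (bounded_idx_prod I Z 1).
  exists (fun z => (exist (fun k => k < 1) 0 (le_n 1), f z)).
  intros x y E. inversion E. auto.
Qed.

Lemma existT_inl_inj {S : Type} (A B : S -> Type) s s' (x : A s) (x' : A s') :
  existT (fun s => (A s + B s)%type) s (inl x) = existT _ s' (inl x') ->
  existT A s x = existT A s' x'.
Proof.
  intro H. apply (f_equal (fun p : {s & (A s + B s)%type} => match p with
    | existT _ s (inl x) => Some (existT A s x) | _ => None end)) in H.
  inversion H. auto.
Qed.

Lemma existT_inr_inj {S : Type} (A B : S -> Type) s s' (x : B s) (x' : B s') :
  existT (fun s => (A s + B s)%type) s (inr x) = existT _ s' (inr x') ->
  existT B s x = existT B s' x'.
Proof.
  intro H. apply (f_equal (fun p : {s & (A s + B s)%type} => match p with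
    | existT _ s (inr x) => Some (existT B s x) | _ => None end)) in H.
  inversion H. auto.
Qed.

Lemma existT_exist_inj {S : Type} (D : S -> Type) (P : forall s, D s -> Prop) s s'
  (x : D s) (x' : D s') (h : P s x) (h' : P s' x') :
  existT D s x = existT D s' x' ->
  existT (fun s => {y : D s | P s y}) s (exist _ x h) = existT _ s' (exist _ x' h').
Proof.
  intro H.
  enough (forall (q : {s & D s}) (hq : P (projT1 q) (projT2 q)), existT D s x = q ->
    existT (fun s => {y : D s | P s y}) s (exist _ x h) = existT _ (projT1 q) (exist _ (projT2 q) hq))
    as Hq by exact (Hq (existT D s' x') h' H).
  intros q hq E. destruct E. simpl. repeat f_equal. apply proof_irrelevance.
Qed.

Section Realize.
Variables (L : language) (M : structure L).
Variables (V B : sort L -> Type) (bB : forall s, B s -> carrier M s).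

Definition var_or_param s := (V s + B s)%type.

Definition joint_env (envV : forall s, V s -> carrier M s) : forall s, var_or_param s -> carrier M s :=
  fun s z => match z with inl v => envV s v | inr b => bB s b end.

Variable p : formula var_or_param -> Prop.

Definition finitely_satisfiable :=
  forall D, (forall phi, In phi D -> p phi) ->
  exists envV, forall phi, In phi D -> sat phi (joint_env envV).

Hypothesis p_finsat : finitely_satisfiable.

Definition assignment := pmap (fun u : {s & V s} => carrier M (projT1 u)).

Definition extends (c : assignment) (envV : forall s, V s -> carrier M s) :=
  forall s v m, c (existT _ s v) = Some m -> envV s v = m.

Definition consistent (c : assignment) :=
  forall D, (forall phi, In phi D -> p phi) ->
  exists envV, extends c envV /\ forall phi, In phi D -> sat phi (joint_env envV).

Lemma consistent_empty : consistent (fun _ => None).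
Proof.
  intros D HD. destruct (p_finsat D HD) as [envV HV].
  exists envV. split; auto. intros s v m E; discriminate.
Qed.

Definition var_keys (x : {s & var_or_param s}) : list {s & V s} :=
  match x with existT _ s (inl v) => [existT _ s v] | existT _ _ (inr _) => [] end.

Lemma consistent_chain_sup C : (forall c, C c -> consistent c) -> chain pmap_le C ->
  consistent (pmap_sup C).
Proof.
  intros HC Hch D HD.
  destruct (sat_finite_support_list L M D) as [F HF].
  destruct (pmap_sup_finite _ _ C (flat_map var_keys F) Hch) as [d [Hd Hdom]].
  assert (Cd : consistent d) by (destruct Hd as [->|Cd]; [apply consistent_empty | auto]).
  destruct (Cd D HD) as [envV [Hext Hs]].
  exists (fun s v => match pmap_sup C (existT _ s v) with Some m => m | None => envV s v end).
  split.
  - intros s v m E. rewrite E. reflexivity.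
  - intros phi Hphi. rewrite (HF phi Hphi _ (joint_env envV)); [apply Hs; auto|].
    intros s [v|b] Hx; simpl; [|reflexivity].
    destruct (pmap_sup C (existT _ s v)) as [m|] eqn:Es; [|reflexivity].
    symmetry. apply Hext. rewrite Hdom; [exact Es| |congruence].
    apply in_flat_map. exists (existT _ s (inl v)). simpl; auto.
Qed.

Variable K : Type.
Hypothesis small_vars : small K {s & var_or_param s}.
Hypothesis hsat : saturated M K.

Section Extend.
Variable c : assignment.
Hypothesis Cc : consistent c.
Variables (s0 : sort L) (v0 : V s0).
Hypothesis Hv0 : c (existT _ s0 v0) = None.
Variable env0 : forall s, V s -> carrier M s.
Hypothesis He0 : extends c env0.

Definition is_v0 s (v : V s) := exists e : s0 = s, eq_rect s0 V v0 s e = v.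

(* Variables assigned by [c] and parameters become parameters, [v0] becomes the free variable,
   and the other variables of [F] are to be quantified out. *)
Definition restrict_to (F : list {s & var_or_param s}) s (z : var_or_param s) : option (ext var_or_param s0 s) :=
  match z with
  | inr b => Some (inl (inr b))
  | inl v => match c (existT _ s v) with
             | Some _ => Some (inl (inl v))
             | None => match excluded_middle_informative (is_v0 s v) with
                       | left h => Some (inr (proj1_sig (constructive_indefinite_description _ h)))
                       | right _ => if excluded_middle_informative (In (existT _ s (inl v)) F)
                                    then None else Some (inl (inl v))
                       end
             end
  end.

(* [theta] is the type of [v0] over the parameters induced by the conditions [D]. *)
Definition describes (D : list (formula var_or_param)) (theta : formula (ext var_or_param s0)) :=
  (forall m, sat theta (extend (joint_env env0) m) -> exists envV, extends c envV /\
     envV s0 v0 = m /\ forall phi, In phi D -> sat phi (joint_env envV)) /\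
  (forall envV, extends c envV -> (forall phi, In phi D -> sat phi (joint_env envV)) ->
     sat theta (extend (joint_env env0) (envV s0 v0))).

Lemma describes_exists D : exists theta, describes D theta.
Proof.
  set (conjD := big_and (ftrue (s0 : sort L) (inl v0 : var_or_param s0)) D).
  destruct (sat_finite_support L M conjD) as [F HF].
  destruct (exists_projection L M conjD F (ext var_or_param s0) (restrict_to F)) as [th Hth].
  { intros s [v|b] E; simpl in E; [|discriminate].
    destruct (c (existT _ s v)); [discriminate|].
    destruct (excluded_middle_informative _); [discriminate|].
    destruct (excluded_middle_informative _); [auto|discriminate]. }
  exists th. split.
  - intros m Hm. apply Hth in Hm. destruct Hm as [envZ [Ha Hs]].
    exists (fun s v => envZ s (inl v)).
    assert (EZ : joint_env (fun s v => envZ s (inl v)) = envZ).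
    { apply functional_extensionality_dep; intro s; apply functional_extensionality.
      intros [v|b]; [reflexivity|]. symmetry. exact (Ha s (inr b) (inl (inr b)) eq_refl). }
    split; [|split].
    + intros s v m' E. rewrite (Ha s (inl v) (inl (inl v))); simpl; [|rewrite E; auto].
      apply He0, E.
    + assert (H0 : is_v0 s0 v0) by (exists eq_refl; auto).
      destruct (constructive_indefinite_description _ H0) as [e He] eqn:Ee.
      rewrite (Ha s0 (inl v0) (inr e)); simpl.
      * rewrite (proof_irrelevance _ e eq_refl). reflexivity.
      * rewrite Hv0. destruct (excluded_middle_informative (is_v0 s0 v0)) as [h|h]; [|contradiction].
        rewrite (proof_irrelevance _ h H0), Ee. reflexivity.
    + rewrite EZ. apply sat_big_and in Hs. apply Hs.
  - intros envV Hext HsD. apply Hth.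
    exists (fun s z => match restrict_to F s z with
                       | Some w => extend (joint_env env0) (envV s0 v0) s w
                       | None => joint_env envV s z end).
    split; [intros s z w E; rewrite E; auto|].
    apply (HF (joint_env envV)); [|apply sat_big_and; split; auto; apply sat_ftrue].
    intros s [v|b] Hz; simpl; [|reflexivity].
    destruct (c (existT _ s v)) as [m'|] eqn:Ec.
    + simpl. rewrite (He0 _ _ _ Ec). exact (Hext s v m' Ec).
    + destruct (excluded_middle_informative (is_v0 s v)) as [h|h].
      * destruct (constructive_indefinite_description _ h) as [e He]. simpl.
        subst v. destruct e. reflexivity.
      * destruct (excluded_middle_informative _) as [h'|h']; [reflexivity|contradiction].
Qed.

Definition v0_type (theta : formula (ext var_or_param s0)) :=
  exists D, (forall phi, In phi D -> p phi) /\ describes D theta.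

Lemma v0_type_finsat (Th : list (formula (ext var_or_param s0))) : (forall th, In th Th -> v0_type th) ->
  exists m, forall th, In th Th -> sat th (extend (joint_env env0) m).
Proof.
  intro HTh.
  enough (exists D, (forall phi, In phi D -> p phi) /\ forall th, In th Th -> forall envV,
    extends c envV -> (forall phi, In phi D -> sat phi (joint_env envV)) ->
    sat th (extend (joint_env env0) (envV s0 v0))) as [D [HD HDTh]].
  { destruct (Cc D HD) as [envV [Hext Hs]]. exists (envV s0 v0). intros th Hth. apply HDTh; auto. }
  induction Th as [|th Th IH].
  - exists []. split; simpl; tauto.
  - destruct IH as [D [HD1 HD2]]; [intros; apply HTh; right; auto|].
    destruct (HTh th (or_introl eq_refl)) as [D' [HD'1 [_ HD'3]]].
    exists (D ++ D'). split.
    + intros phi Hphi. apply in_app_or in Hphi. destruct Hphi; auto.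
    + intros th' [<-|Hth'] envV Hext Hs; [apply HD'3 | apply HD2]; auto;
        intros; apply Hs, in_or_app; auto.
Qed.

Lemma consistent_extend : exists c', consistent c' /\ pmap_le c c' /\ c' (existT _ s0 v0) <> None.
Proof.
  destruct (hsat var_or_param (joint_env env0) small_vars s0 v0_type v0_type_finsat) as [m Hm].
  exists (fun u => match u as u return option (carrier M (projT1 u)) with
    | existT _ s v => match excluded_middle_informative (is_v0 s v) with
      | left h => Some (eq_rect s0 (carrier M) m s (proj1_sig (constructive_indefinite_description _ h)))
      | right _ => c (existT _ s v) end end).
  split; [|split].
  - intros D HD. destruct (describes_exists D) as [th Hth].
    destruct (proj1 Hth m (Hm th (ex_intro _ D (conj HD Hth)))) as [envV [Hext [Hv Hs]]].
    exists envV. split; auto.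
    intros s v x. simpl. destruct (excluded_middle_informative (is_v0 s v)) as [h|h]; intro E.
    + destruct (constructive_indefinite_description _ h) as [e He]. simpl in E.
      injection E as <-. subst v. destruct e. exact Hv.
    + apply Hext, E.
  - intros [s v] x E. simpl. destruct (excluded_middle_informative (is_v0 s v)) as [h|h]; auto.
    destruct h as [e He]. subst v. destruct e. simpl in E. congruence.
  - simpl. destruct (excluded_middle_informative (is_v0 s0 v0)) as [h|h]; [discriminate|].
    exfalso; apply h; exists eq_refl; auto.
Qed.
End Extend.

(* Saturation for fewer than [K] variables: a maximal consistent partial assignment (Zorn) is
   total, since [consistent_extend] assigns any missing variable. *)
Theorem realize_type : exists envV, forall phi, p phi -> sat phi (joint_env envV).
Proof.
  destruct (pmap_maximal _ _ consistent consistent_chain_sup) as [c [Cc Hmax]].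
  assert (Tot : forall s v, c (existT _ s v) <> None).
  { intros s v Hn. destruct (Cc [] ltac:(simpl; tauto)) as [env0 [He0 _]].
    destruct (consistent_extend c Cc s v Hn env0 He0) as [c' [Cc' [Hle Hne]]].
    rewrite (Hmax c' Cc' Hle) in Hne. contradiction. }
  destruct (Cc [] ltac:(simpl; tauto)) as [env0 [He0 _]].
  exists env0. intros phi Hphi.
  destruct (Cc [phi] ltac:(intros psi [<-|[]]; auto)) as [env1 [He1 Hs1]].
  replace env0 with env1; [apply Hs1; left; auto|].
  apply functional_extensionality_dep; intro s; apply functional_extensionality; intro v.
  destruct (c (existT _ s v)) as [m|] eqn:E; [|exfalso; apply (Tot s v E)].
  rewrite (He0 _ _ _ E), (He1 _ _ _ E). reflexivity.
Qed.
End Realize.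

Section AutGroup.
Variable L : language.
Variable M : structure L.

Definition aut_id : aut M.
Proof.
  refine (@Aut L M (fun s m => m) (fun s m => m) _ _ _ _); intros; try reflexivity; tauto.
Defined.

Definition aut_comp (g h : aut M) : aut M.
Proof.
  refine (@Aut L M (fun s m => af g (af h m)) (fun s m => ab h (ab g m)) _ _ _ _).
  - intros s m. rewrite !af_ab. reflexivity.
  - intros s m. rewrite !ab_af. reflexivity.
  - intros f args. rewrite !af_fun. reflexivity.
  - intros r args. rewrite (af_rel _ _ g r (fun i => af h (args i))). apply af_rel.
Defined.

Definition aut_inv (g : aut M) : aut M.
Proof.
  refine (@Aut L M (fun s m => ab g m) (fun s m => af g m) _ _ _ _).
  - intros s m. apply ab_af.
  - intros s m. apply af_ab.
  - intros f args.
    pose proof (f_equal (fun z => ab g z) (af_fun _ _ g f (fun i => ab g (args i)))) as H.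
    simpl in H. rewrite ab_af in H. rewrite H. do 2 f_equal.
    apply functional_extensionality_dep; intro i. symmetry; apply af_ab.
  - intros r args. rewrite <- (af_rel _ _ g r (fun i => ab g (args i))).
    replace (fun i => af g (ab g (args i))) with args; [tauto|].
    apply functional_extensionality_dep; intro i. symmetry; apply af_ab.
Defined.

Variables (I : Type) (sI : I -> sort L).

Definition tup := forall i, carrier M (sI i).

Definition act (g : aut M) (x : tup) : tup := fun i => af g (x i).

Lemma act_inv g x : act (aut_inv g) (act g x) = x.
Proof. apply functional_extensionality_dep; intro i. apply ab_af. Qed.

Lemma act_inv_r g x : act g (act (aut_inv g) x) = x.
Proof. apply functional_extensionality_dep; intro i. apply af_ab. Qed.

(** * Products of sets [{t | R (t a) a}] as chains of conjugates of [a] *)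

Variable a : tup.
Variables (Y : Type) (R : Y -> tup -> tup -> Prop) (sgn : Y -> bool).
Hypothesis R_invariant : forall y g x z, R y (act g x) (act g z) <-> R y x z.

Definition prod_sets (lq : list Y) : autset M :=
  aset_prod (map (fun q => ((fun t : aut M => R q (act t a) a) : autset M, sgn q)) lq).

Definition link (q : Y) (x z : tup) := if sgn q then R q z x else R q x z.

Lemma link_invariant q g x z : link q (act g x) (act g z) <-> link q x z.
Proof. unfold link. destruct (sgn q); apply R_invariant. Qed.

Definition is_chain (lq : list Y) (c : nat -> tup) :=
  c 0 = a /\ (forall k, k <= length lq -> exists g, c k = act g a) /\
  (forall k q, nth_error lq k = Some q -> link q (c k) (c (S k))).

Lemma aset_pow_link q (t : aut M) :
  aset_pow (fun t => R q (act t a) a) (sgn q) t <-> link q a (act t a).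
Proof.
  unfold aset_pow, link. destruct (sgn q); [tauto|]. split.
  - intros [t0 [H1 H2]].
    replace (act t a) with (act (aut_inv t0) a).
    + rewrite <- (R_invariant q t0), act_inv_r. exact H1.
    + apply functional_extensionality_dep; intro i. symmetry; apply H2.
  - intro H. exists (aut_inv t). split; [|reflexivity].
    rewrite <- (R_invariant q t), act_inv_r. exact H.
Qed.

Lemma chain_of_prod lq : forall s, prod_sets lq s ->
  exists c, is_chain lq c /\ c (length lq) = act s a.
Proof.
  induction lq as [|q rest IH]; intros s Hs.
  - exists (fun _ => a). split; [split; [auto|split]|].
    + intros k _. exists aut_id. reflexivity.
    + intros k q E. destruct k; discriminate.
    + simpl. apply functional_extensionality_dep; intro i. symmetry. apply Hs.
  - destruct Hs as [t [r [Ht [Hr Hs]]]].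
    destruct (IH r Hr) as [c' [[C0 [Cg Cr]] Cl]].
    exists (fun k => match k with 0 => a | S k' => act t (c' k') end).
    split; [split; [auto|split]|].
    + intros [|k] Hk; [exists aut_id; reflexivity|].
      destruct (Cg k ltac:(simpl in Hk; lia)) as [h Hh]. exists (aut_comp t h). rewrite Hh. reflexivity.
    + intros [|k] q' E; simpl in E.
      * inversion E; subst q'. rewrite C0. apply aset_pow_link. exact Ht.
      * rewrite link_invariant. apply Cr; auto.
    + simpl. rewrite Cl. apply functional_extensionality_dep; intro i. symmetry. apply Hs.
Qed.

Lemma prod_of_chain lq : lq <> [] -> forall s c, is_chain lq c -> c (length lq) = act s a ->
  prod_sets lq s.
Proof.
  induction lq as [|q rest IH]; intros Hne s c [C0 [Cg Cr]] Cl; [congruence|].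
  destruct rest as [|q2 rest'].
  - exists s, aut_id. split; [|split; [|intros; reflexivity]].
    + apply aset_pow_link. rewrite <- Cl, <- C0. apply Cr. reflexivity.
    + intros s0 m; reflexivity.
  - destruct (Cg 1 ltac:(simpl; lia)) as [g Hg].
    exists g, (aut_comp (aut_inv g) s). split; [|split].
    + apply aset_pow_link. rewrite <- Hg, <- C0. apply Cr. reflexivity.
    + apply (IH ltac:(discriminate) _ (fun k => act (aut_inv g) (c (S k)))).
      * split; [|split].
        -- simpl. rewrite Hg. apply act_inv.
        -- intros k Hk. destruct (Cg (S k) ltac:(simpl in *; lia)) as [h Hh].
           exists (aut_comp (aut_inv g) h). rewrite Hh. reflexivity.
        -- intros k q' E. rewrite link_invariant. apply Cr. exact E.
      * simpl in Cl |- *. rewrite Cl. reflexivity.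
    + intros s0 m. simpl. rewrite af_ab. reflexivity.
Qed.
End AutGroup.

Arguments aut_id {L M}.
Arguments aut_comp {L M} g h.
Arguments aut_inv {L M} g.
Arguments tup {L} M {I} sI.
Arguments act {L M I sI} g x i.

Lemma Forall2_map_seq {A B} (R : A -> B -> Prop) (f : nat -> B) : forall (lq : list A) j,
  (forall k x, nth_error lq k = Some x -> R x (f (j + k))) ->
  Forall2 R lq (map f (seq j (length lq))).
Proof.
  induction lq as [|x lq IH]; intros j H; simpl; constructor.
  - specialize (H 0 x eq_refl). rewrite Nat.add_0_r in H. auto.
  - apply IH. intros k y E. replace (S j + k) with (j + S k) by lia. apply (H (S k)); auto.
Qed.

Lemma nth_error_combine_map_seq {A B} (f : nat -> B) : forall (lq : list A) j k x,
  nth_error lq k = Some x ->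
  nth_error (combine lq (map f (seq j (length lq)))) k = Some (x, f (j + k)).
Proof.
  induction lq as [|y lq IH]; intros j k x E; [destruct k; discriminate|].
  destruct k; simpl in *.
  - inversion E; subst. rewrite Nat.add_0_r. auto.
  - rewrite (IH (S j) k x E). do 3 f_equal. lia.
Qed.

Lemma small_inj K X Y : small K X -> inj Y X -> small K Y.
Proof.
  intros [H1 H2] HY. split; [eapply inj_trans; eauto|].
  intro H. apply H2. eapply inj_trans; eauto.
Qed.

Section Chains.
Variable L : language.
Variable M : structure L.
Variable K : Type.
Hypothesis hsat : saturated M K.
Hypothesis hhom : strongly_homogeneous M K.
Variables (I : Type) (sI : I -> sort L).
Hypothesis hI : small K I.
Variable a : tup M sI.
Variable l : list ((formula (XY sI) -> Prop) * bool).

Definition JI s := {i : I | sI i = s}.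

Definition tup_env (x : tup M sI) : forall s, JI s -> carrier M s :=
  fun s w => match w with exist _ i e => eq_rect (sI i) (carrier M) (x i) s e end.

Lemma tup_env_act (g : aut M) (x : tup M sI) : tup_env (act g x) = fun s w => af g (tup_env x s w).
Proof.
  apply functional_extensionality_dep; intro s; apply functional_extensionality; intros [i e].
  destruct e. reflexivity.
Qed.

Lemma pair_env_act (g : aut M) (x y : tup M sI) :
  pair_env (act g x) (act g y) = fun s v => af g (pair_env x y s v).
Proof.
  apply functional_extensionality_dep; intro s; apply functional_extensionality.
  intros [[i e]|[i e]]; destruct e; reflexivity.
Qed.

Lemma inj_JI_sigma : inj {s & JI s} I.
Proof.
  exists (fun p : {s & JI s} => proj1_sig (projT2 p)).
  intros [s [i e]] [s' [i' e']]; simpl. intro E. subst i'. destruct e, e'. reflexivity.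
Qed.

Lemma conjugate_of_type (x : tup M sI) :
  (forall phi : formula JI, sat phi (tup_env a) -> sat phi (tup_env x)) -> exists g, x = act g a.
Proof.
  intro H. destruct (hhom JI (small_inj _ _ _ hI inj_JI_sigma) (tup_env a) (tup_env x)) as [g Hg].
  - intro phi. split; [apply H|]. intro H1. apply NNPP; intro H2.
    apply (H (fneg phi)) in H2. contradiction.
  - exists g. apply functional_extensionality_dep; intro i. symmetry. apply (Hg (sI i) (exist _ i eq_refl)).
Qed.

Definition type_rel (q : (formula (XY sI) -> Prop) * bool) (x y : tup M sI) :=
  forall phi, fst q phi -> sat phi (pair_env x y).

Definition form_rel (q : ((formula (XY sI) -> Prop) * bool) * formula (XY sI)) (x y : tup M sI) :=
  sat (snd q) (pair_env x y).

Lemma type_rel_invariant q (g : aut M) x z : type_rel q (act g x) (act g z) <-> type_rel q x z.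
Proof.
  unfold type_rel. rewrite pair_env_act.
  split; intros H phi Hp; specialize (H phi Hp); [rewrite sat_aut in H | rewrite sat_aut]; auto.
Qed.

Lemma form_rel_invariant q (g : aut M) x z : form_rel q (act g x) (act g z) <-> form_rel q x z.
Proof. unfold form_rel. rewrite pair_env_act. apply sat_aut. Qed.

Definition type_chain := is_chain L M I sI a _ type_rel snd l.
Definition form_chain phis := is_chain L M I sI a _ form_rel (fun q => snd (fst q)) (combine l phis).

(** * Chains as realizations of a type *)

Definition chain_len := length l.

(* Variables for the chain elements [c 1, ..., c chain_len] and extra variables [W];
   parameters for [a] and extra parameters [Bx]. *)
Definition elem_vars s := (idx chain_len * JI s)%type.
Variables (W Bx : sort L -> Type) (bx : forall s, Bx s -> carrier M s).
Definition chain_vars s := (elem_vars s + W s)%type.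
Definition chain_params s := (JI s + Bx s)%type.
Definition chain_param_val : forall s, chain_params s -> carrier M s :=
  fun s u => match u with inl w => tup_env a s w | inr x => bx s x end.
Local Notation Z := (var_or_param L chain_vars chain_params).
Local Notation env_of := (joint_env L M chain_vars chain_params chain_param_val).

(* [c j] for [j = 0] and (junk) for [j > chain_len] is the parameter [a]. *)
Definition cvar (j : nat) s (w : JI s) : Z s :=
  match j with
  | S j' => match lt_dec j' chain_len with
            | left h => inl (inl (exist _ j' h, w))
            | right _ => inr (inl w)
            end
  | 0 => inr (inl w)
  end.

Definition pvar (j1 j2 : nat) s (v : XY sI s) : Z s :=
  match v with inl w => cvar j1 s w | inr w => cvar j2 s w end.

Definition chain_tup (envV : forall s, chain_vars s -> carrier M s) (j : nat) : tup M sI :=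
  fun i => env_of envV (sI i) (cvar j (sI i) (exist _ i eq_refl)).

Lemma env_cvar envV j : (fun s w => env_of envV s (cvar j s w)) = tup_env (chain_tup envV j).
Proof.
  apply functional_extensionality_dep; intro s; apply functional_extensionality; intros [i e].
  destruct e. reflexivity.
Qed.

Lemma env_pvar envV j1 j2 :
  (fun s v => env_of envV s (pvar j1 j2 s v)) = pair_env (chain_tup envV j1) (chain_tup envV j2).
Proof.
  apply functional_extensionality_dep; intro s; apply functional_extensionality.
  intros [[i e]|[i e]]; destruct e; reflexivity.
Qed.

Definition chain_env (c : nat -> tup M sI) (wenv : forall s, W s -> carrier M s) :
  forall s, chain_vars s -> carrier M s :=
  fun s v => match v with inl (k, w) => tup_env (c (S (proj1_sig k))) s w | inr x => wenv s x end.

Lemma chain_tup_env c wenv j : j <= chain_len -> c 0 = a -> chain_tup (chain_env c wenv) j = c j.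
Proof.
  intros Hj C0. apply functional_extensionality_dep; intro i. unfold chain_tup, cvar.
  destruct j as [|j]; [rewrite C0; reflexivity|].
  destruct (lt_dec j chain_len); [reflexivity | lia].
Qed.

Definition no_type : (formula (XY sI) -> Prop) * bool := (fun _ => False, true).

Definition link_formula k (psi : formula (XY sI)) : formula Z :=
  formula_rename psi Z (if snd (nth k l no_type) then pvar (S k) k else pvar k (S k)).

Variable Theta : formula Z -> Prop.

Definition chain_type (d : formula Z) :=
  (exists k phi, k < chain_len /\ sat phi (tup_env a) /\ d = formula_rename phi Z (cvar (S k))) \/
  (exists k psi, k < chain_len /\ fst (nth k l no_type) psi /\ d = link_formula k psi) \/ Theta d.

Lemma chain_type_link envV k (psi : formula (XY sI)) : k < chain_len ->
  let q := nth k l no_type in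
  (sat (link_formula k psi) (env_of envV) <->
   (if snd q then sat psi (pair_env (chain_tup envV (S k)) (chain_tup envV k))
    else sat psi (pair_env (chain_tup envV k) (chain_tup envV (S k))))).
Proof.
  intros Hk q. unfold link_formula. fold q. destruct (snd q); rewrite sat_rename, env_pvar; tauto.
Qed.

(* Needed because [formula (XY sI)] may be empty; the valid [fverum phi0] serves as the
   conjunction of no formulas. *)
Variable phi0 : formula (XY sI).

Definition entailed_forms phis := Forall2 (fun p phi => entails M (fst p) phi) l phis.

Hypothesis finite_chains : forall phis, entailed_forms phis ->
  forall Th0, (forall th, In th Th0 -> Theta th) ->
  exists c wenv, form_chain phis c /\ forall th, In th Th0 -> sat th (env_of (chain_env c wenv)).

Definition link_part (D : list (formula Z)) k : list (formula (XY sI)) :=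
  flat_map (fun d => match excluded_middle_informative
    (exists psi, fst (nth k l no_type) psi /\ d = link_formula k psi) with
    | left h => [proj1_sig (constructive_indefinite_description _ h)]
    | right _ => [] end) D.

Lemma link_part_spec D k psi :
  In psi (link_part D k) -> fst (nth k l no_type) psi.
Proof.
  intro Hin. apply in_flat_map in Hin. destruct Hin as [d [_ Hd]].
  destruct (excluded_middle_informative _) as [h|h]; [|destruct Hd].
  destruct Hd as [<-|[]]. exact (proj1 (proj2_sig (constructive_indefinite_description _ h))).
Qed.

Lemma link_part_complete D k psi : In (link_formula k psi) D -> fst (nth k l no_type) psi ->
  exists psi', In psi' (link_part D k) /\ link_formula k psi = link_formula k psi'.
Proof.
  intros Hd Hpsi.
  assert (Hh : exists psi', fst (nth k l no_type) psi' /\ link_formula k psi = link_formula k psi') by eauto.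
  exists (proj1_sig (constructive_indefinite_description _ Hh)). split.
  - apply in_flat_map. exists (link_formula k psi). split; auto.
    destruct (excluded_middle_informative _) as [h|h]; [|contradiction].
    rewrite (proof_irrelevance _ h Hh). left; auto.
  - exact (proj2 (proj2_sig (constructive_indefinite_description _ Hh))).
Qed.

Lemma chain_type_finsat : finitely_satisfiable L M chain_vars chain_params chain_param_val chain_type.
Proof.
  intros D HD.
  set (phis := map (fun k => big_and (fverum phi0) (link_part D k)) (seq 0 chain_len)).
  set (Th0 := flat_map (fun d => if excluded_middle_informative (Theta d) then [d] else []) D).
  destruct (finite_chains phis) with (Th0 := Th0) as [c [wenv [[C0 [Cg Cr]] HTh]]].
  - apply Forall2_map_seq. intros k x E. simpl.
    rewrite <- (nth_error_nth l k no_type E). exists (link_part D k).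
    split; [apply link_part_spec|]. intros env Henv. apply sat_big_and. split; auto. apply sat_fverum.
  - intros th Hth. apply in_flat_map in Hth. destruct Hth as [d [_ Hd]].
    destruct (excluded_middle_informative _); [destruct Hd as [<-|[]]; auto | destruct Hd].
  - exists (chain_env c wenv). intros d Hd.
    assert (Hct : forall j, j <= chain_len -> chain_tup (chain_env c wenv) j = c j)
      by (intros; apply chain_tup_env; auto).
    assert (Hlen : length (combine l phis) = chain_len)
      by (unfold phis; rewrite length_combine, length_map, length_seq; unfold chain_len; lia).
    destruct (HD d Hd) as [[k [phi [Hk [Hphi ->]]]]|[[k [psi [Hk [Hpsi ->]]]]|HT]].
    + rewrite sat_rename, env_cvar, Hct by lia. rewrite Hlen in Cg.
      destruct (Cg (S k) ltac:(lia)) as [g Hg]. rewrite Hg, tup_env_act, sat_aut. exact Hphi.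
    + destruct (link_part_complete D k psi Hd Hpsi) as [psi' [Hin ->]].
      assert (E : nth_error (combine l phis) k =
                  Some (nth k l no_type, big_and (fverum phi0) (link_part D k))).
      { apply (nth_error_combine_map_seq (fun k => big_and (fverum phi0) (link_part D k)) l 0 k).
        apply nth_error_nth'. exact Hk. }
      specialize (Cr k _ E). unfold link, form_rel in Cr. simpl in Cr.
      apply chain_type_link; auto. rewrite !Hct by lia.
      destruct (snd (nth k l no_type)); apply (sat_big_and L M) in Cr; apply Cr; auto.
    + apply HTh. apply in_flat_map. exists d. split; auto.
      destruct (excluded_middle_informative _); [left; auto | contradiction].
Qed.

Hypothesis small_vars : small K {s & Z s}.

(* Saturation realizes [chain_type]; each realized [c (k+1)] has the type of [a], hence is
   conjugate to it by homogeneity. *)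
Theorem realize_chain : exists envV, type_chain (chain_tup envV) /\
  forall th, Theta th -> sat th (env_of envV).
Proof.
  destruct (realize_type L M chain_vars chain_params chain_param_val chain_type chain_type_finsat
    K small_vars hsat) as [envV HV].
  exists envV. split; [split; [reflexivity|split]|].
  - intros [|k] Hk; [exists aut_id; reflexivity|].
    apply conjugate_of_type. intros phi Hphi.
    assert (H1 : chain_type (formula_rename phi Z (cvar (S k)))).
    { left. exists k, phi. split; [unfold chain_len; lia | split; auto]. }
    apply HV in H1. rewrite sat_rename, env_cvar in H1. exact H1.
  - intros k q E.
    assert (Hk : k < chain_len) by (apply nth_error_Some; congruence).
    pose proof (nth_error_nth l k no_type E) as Eq. subst q.
    assert (H : forall phi, fst (nth k l no_type) phi -> sat (link_formula k phi) (env_of envV))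
      by (intros phi Hphi; apply HV; right; left; exists k, phi; auto).
    unfold link, type_rel. destruct (snd (nth k l no_type)) eqn:Es; intros phi Hphi;
      specialize (H phi Hphi); apply chain_type_link in H; auto; simpl in H; rewrite Es in H; exact H.
  - intros th Hth. apply HV. right; right; auto.
Qed.
End Chains.

Arguments JI {L I} sI s.
Arguments tup_env {L M I sI} x s _.
Arguments type_rel {L M I sI} q x y.
Arguments form_rel {L M I sI} q x y.
Arguments type_rel_invariant {L M I sI} q g x z.
Arguments form_rel_invariant {L M I sI} q g x z.
Arguments type_chain {L M I sI} a l c.
Arguments form_chain {L M I sI} a l phis c.
Arguments chain_len {L I sI} l.
Arguments elem_vars {L I sI} l s.
Arguments chain_vars {L I sI} l W s.
Arguments chain_params {L I} sI Bx s.
Arguments chain_param_val {L M I sI} a Bx bx s _.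
Arguments cvar {L I sI} l W Bx j s w.
Arguments chain_tup {L M I sI} a l W Bx bx envV j i.
Arguments chain_env {L M I sI} l W c wenv s _.
Arguments entailed_forms {L} M {I sI} l phis.
Arguments realize_chain {L M K} hsat hhom {I sI} hI a l W Bx bx Theta phi0 finite_chains small_vars.
Arguments chain_tup_env {L M I sI a l W Bx bx} c wenv j.
Arguments inj_JI_sigma {L I} sI.
Arguments conjugate_of_type {L M K} hhom {I sI} hI a x.

Lemma formula_inhabited_transfer (L : language) (X Y : sort L -> Type) (phi : formula X) :
  inhabited (formula Y).
Proof.
  destruct (classic (inhabited (sort L))) as [[s0]|Hs]; constructor.
  - exact (fex s0 (ftrue s0 (inr eq_refl : ext Y s0 s0))).
  - exact (formula_rename phi Y (fun s _ => False_rect _ (Hs (inhabits s)))).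
Qed.

Section Products.
Variables (L : language) (M : structure L) (I : Type) (sI : I -> sort L) (a : tup M sI).

Definition type_product (l : list ((formula (XY sI) -> Prop) * bool)) : autset M :=
  prod_sets L M I sI a _ type_rel snd l.

Definition form_product (l : list ((formula (XY sI) -> Prop) * bool)) phis : autset M :=
  prod_sets L M I sI a _ form_rel (fun q => snd (fst q)) (combine l phis).

Lemma type_product_sub_form_product l phis : entailed_forms M l phis ->
  forall s, type_product l s -> form_product l phis s.
Proof.
  intro HF. induction HF as [|p phi l phis Hp HF IH]; intros s Hs; [exact Hs|].
  destruct Hs as [t [r [Ht [Hr Hs]]]]. exists t, r. split; [|split; [apply IH, Hr | exact Hs]].
  destruct Hp as [Lp [HLp1 HLp2]].
  assert (Sub : forall x y, type_rel p x y -> form_rel (p, phi) x y)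
    by (intros x y H0; apply HLp2; intros psi Hpsi; apply H0, HLp1; auto).
  simpl in *. destruct (snd p); simpl in *; auto.
  destruct Ht as [t0 [H1 H2]]. exists t0. split; auto.
Qed.
End Products.

Definition param_env {L : language} {M : structure L} {D E : sort L -> Type}
  (d : forall s, D s -> carrier M s) (e : forall s, E s -> carrier M s) (sigma : aut M) :
  forall s, (D s + E s)%type -> carrier M s :=
  fun s v => match v with inl x => af sigma (d s x) | inr y => e s y end.

(* Only the finitely many parameters in the support of the defining formula matter. *)
Lemma rel_definable_finite (L : language) (M : structure L) (A : autset M) : rel_definable A ->
  exists (D E : sort L -> Type) (psi : formula (fun s => (D s + E s)%type))
    (d : forall s, D s -> carrier M s) (e : forall s, E s -> carrier M s),
    inj {s & D s} nat /\ inj {s & E s} nat /\ forall sigma, A sigma <-> sat psi (param_env d e sigma).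
Proof.
  intros [D [E [psi [d [e HA]]]]].
  destruct (formula_transport L M psi) as [F HF].
  set (inF := fun s (u : (D s + E s)%type) => In (existT (fun s => (D s + E s)%type) s u) F).
  set (kap := fun s (u : (D s + E s)%type) =>
    match u return option ({x : D s | inF s (inl x)} + {y : E s | inF s (inr y)}) with
    | inl x => match excluded_middle_informative (inF s (inl x)) with
               | left h => Some (inl (exist _ x h)) | right _ => None end
    | inr y => match excluded_middle_informative (inF s (inr y)) with
               | left h => Some (inr (exist _ y h)) | right _ => None end
    end).
  destruct (HF _ kap) as [psi' Hpsi'].
  { intros s [x|y] Hu; simpl; destruct (excluded_middle_informative _); [discriminate|contradiction| |];
      [discriminate|contradiction]. }
  exists (fun s => {x : D s | inF s (inl x)}), (fun s => {y : E s | inF s (inr y)}), psi',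
    (fun s x => d s (proj1_sig x)), (fun s y => e s (proj1_sig y)).
  split; [|split].
  - apply (inj_nat_of_listed F (fun p => existT _ (projT1 p) (inl (proj1_sig (projT2 p))))).
    + intros [s [x h]] [s' [x' h']] Ep. apply existT_inl_inj in Ep.
      exact (existT_exist_inj D (fun s x => inF s (inl x)) s s' x x' h h' Ep).
    + intros [s [x h]]. exact h.
  - apply (inj_nat_of_listed F (fun p => existT _ (projT1 p) (inr (proj1_sig (projT2 p))))).
    + intros [s [y h]] [s' [y' h']] Ep. apply existT_inr_inj in Ep.
      exact (existT_exist_inj E (fun s y => inF s (inr y)) s s' y y' h h' Ep).
    + intros [s [y h]]. exact h.
  - intro sigma. rewrite HA. symmetry. apply Hpsi'.
    intros s [x|y] w Hu Hk; simpl in Hk; destruct (excluded_middle_informative _);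
      inversion Hk; reflexivity.
Qed.

Arguments type_product {L M I sI} a l sigma.
Arguments form_product {L M I sI} a l phis sigma.

Section Compactness.
Variables (L : language) (M : structure L) (K : Type).
Hypothesis hK : small K (sort L + fsym L + rsym L + nat)%type.
Hypothesis hsat : saturated M K.
Hypothesis hhom : strongly_homogeneous M K.
Variables (I : Type) (sI : I -> sort L).
Hypothesis hI : small K I.
Variable a : tup M sI.
Variable l : list ((formula (XY sI) -> Prop) * bool).
Hypothesis l_nonempty : l <> [].

Lemma small_chain_vars W Bx : bounded_by I {s & W s} -> bounded_by I {s & Bx s} ->
  small K {s & var_or_param L (chain_vars l W) (chain_params sI Bx) s}.
Proof.
  intros HW HB. apply (small_of_bounded K _ I _ hK hI).
  apply bounded_sigma_sum; apply bounded_sigma_sum; auto.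
  - apply (bounded_idx_prod I _ (chain_len l)).
    exists (fun p : {s & elem_vars l s} => (fst (projT2 p), proj1_sig (snd (projT2 p)))).
    intros [s [k [i e]]] [s' [k' [i' e']]] E. simpl in E. injection E as -> ->.
    destruct e, e'. reflexivity.
  - apply bounded_of_inj, inj_JI_sigma.
Qed.

Lemma chain_length phis (c : nat -> tup M sI) : entailed_forms M l phis ->
  c (length (combine l phis)) = c (chain_len l).
Proof.
  intro HF. unfold chain_len. rewrite length_combine, <- (Forall2_length HF), Nat.min_id. reflexivity.
Qed.

(* The chain may end anywhere if there are no formulas at all. *)
Lemma type_product_no_formulas s : ~ inhabited (formula (XY sI)) -> type_product a l s.
Proof.
  intro Hno.
  apply (prod_of_chain L M I sI a _ _ _ type_rel_invariant l l_nonempty s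
    (fun j => match j with 0 => a | _ => act s a end)).
  - split; [reflexivity|split].
    + intros [|j] _; [exists aut_id | exists s]; reflexivity.
    + intros j q E. unfold link, type_rel. destruct (snd q); intros phi _; exfalso; exact (Hno (inhabits phi)).
  - destruct l; [congruence | reflexivity].
Qed.

(* Realize a chain for the [pi_k] whose last term is [s a], pinned down by parameters. *)
Lemma type_product_of_form_products s :
  (forall phis, entailed_forms M l phis -> form_product a l phis s) -> type_product a l s.
Proof.
  intro H. destruct (classic (inhabited (formula (XY sI)))) as [[phi0]|Hno];
    [|apply type_product_no_formulas; auto].
  set (W := fun _ : sort L => Empty_set).
  set (Theta := fun th : formula (var_or_param L (chain_vars l W) (chain_params sI (JI sI))) =>
     exists i, th =
     feq (tvar (sI i) (cvar l W (JI sI) (chain_len l) (sI i) (exist _ i eq_refl)))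
         (tvar (sI i) (inr (inr (exist _ i eq_refl))
           : var_or_param L (chain_vars l W) (chain_params sI (JI sI)) (sI i)))).
  destruct (realize_chain hsat hhom hI a l W (JI sI) (tup_env (act s a)) Theta phi0)
    as [envV [Hch HTh]].
  - intros phis HF Th0 HTh0. specialize (H phis HF).
    destruct (chain_of_prod L M I sI a _ _ _ form_rel_invariant _ s H) as [c [Hc Hcl]].
    exists c, (fun s (x : W s) => match x with end). split; [exact Hc|].
    intros th Hth. destruct (HTh0 th Hth) as [i ->]. simpl.
    change (chain_tup a l W (JI sI) (tup_env (act s a))
      (chain_env l W c (fun s x => match x with end)) (chain_len l) i = act s a i).
    rewrite chain_tup_env; [| unfold chain_len; lia | apply Hc].
    rewrite <- (chain_length phis c HF), Hcl. reflexivity.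
  - apply small_chain_vars; [apply bounded_nat; exists (fun _ => 0); intros [_ []] |].
    apply bounded_of_inj, inj_JI_sigma.
  - apply (prod_of_chain L M I sI a _ _ _ type_rel_invariant l l_nonempty s _ Hch).
    apply functional_extensionality_dep; intro i. exact (HTh _ (ex_intro _ i eq_refl)).
Qed.

Section DefinableBound.
Variables (D E : sort L -> Type) (psi : formula (fun s => (D s + E s)%type)).
Variables (d : forall s, D s -> carrier M s) (e : forall s, E s -> carrier M s).
Hypothesis D_finite : inj {s & D s} nat.
Hypothesis E_finite : inj {s & E s} nat.
Hypothesis definable_contains : forall sigma, type_product a l sigma -> sat psi (param_env d e sigma).
Hypothesis no_bound : forall phis, entailed_forms M l phis ->
  exists sigma, form_product a l phis sigma /\ ~ sat psi (param_env d e sigma).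

Local Notation Z := (var_or_param L (chain_vars l D) (chain_params sI E)).

Definition a_d_vars s := (JI sI s + D s)%type.

Definition a_d_env : forall s, a_d_vars s -> carrier M s :=
  fun s u => match u with inl w => tup_env a s w | inr x => d s x end.

(* [a] goes to the last term of the chain, [d] to the new variables [W = D]. *)
Definition a_d_var : forall s, a_d_vars s -> Z s :=
  fun s u => match u with inl w => cvar l D E (chain_len l) s w | inr x => inl (inr x) end.

Definition d_e_var : forall s, (D s + E s)%type -> Z s :=
  fun s u => match u with inl x => inl (inr x) | inr y => inr (inr y) end.

(* The last term of the chain and the new variables have the type of [(a, d)], and
   [psi] fails for them. *)
Definition bad_conditions (th : formula Z) :=
  (exists chi : formula a_d_vars, sat chi a_d_env /\ th = formula_rename chi Z a_d_var) \/
  th = formula_rename (fneg psi) Z d_e_var.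

Lemma bad_finite_chains phis : entailed_forms M l phis ->
  forall Th0, (forall th, In th Th0 -> bad_conditions th) ->
  exists c wenv, form_chain a l phis c /\
    forall th, In th Th0 -> sat th (joint_env L M (chain_vars l D) (chain_params sI E)
                                      (chain_param_val a E e) (chain_env l D c wenv)).
Proof.
  intros HF Th0 HTh0.
  destruct (no_bound phis HF) as [s [Hs HnA]].
  destruct (chain_of_prod L M I sI a _ _ _ form_rel_invariant _ s Hs) as [c [Hc Hcl]].
  exists c, (fun s0 x => af s (d s0 x)). split; [exact Hc|].
  set (env := joint_env L M (chain_vars l D) (chain_params sI E) (chain_param_val a E e)
                (chain_env l D c (fun s0 x => af s (d s0 x)))).
  intros th Hth. destruct (HTh0 th Hth) as [[chi [Hchi ->]]| ->].
  - apply sat_rename.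
    replace (fun s0 x => env s0 (a_d_var s0 x)) with (fun s0 u => af s (a_d_env s0 u));
      [rewrite sat_aut; exact Hchi|].
    apply functional_extensionality_dep; intro s0; apply functional_extensionality.
    intros [w|x]; [|reflexivity].
    destruct w as [i e0]. destruct e0.
    change (af s (a i) =
      chain_tup a l D E e (chain_env l D c (fun s0 x => af s (d s0 x))) (chain_len l) i).
    rewrite chain_tup_env; [| unfold chain_len; lia | apply Hc].
    rewrite <- (chain_length phis c HF), Hcl. reflexivity.
  - apply sat_rename. intro H1. apply HnA.
    replace (param_env d e s) with (fun s0 x => env s0 (d_e_var s0 x)); auto.
    apply functional_extensionality_dep; intro s0; apply functional_extensionality.
    intros [x|y]; reflexivity.
Qed.

(* Realize the bad conditions, then move [(a, d)] onto them by homogeneity. *)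
Lemma definable_bound_contradiction : False.
Proof.
  destruct (formula_inhabited_transfer L _ (XY sI) psi) as [phi0].
  destruct (realize_chain hsat hhom hI a l D E e bad_conditions phi0 bad_finite_chains)
    as [envV [Hch HTh]].
  { apply small_chain_vars; apply bounded_nat; auto. }
  set (env := joint_env L M (chain_vars l D) (chain_params sI E) (chain_param_val a E e) envV).
  assert (HsJD : small K {s & a_d_vars s}).
  { apply (small_of_bounded K _ I _ hK hI), bounded_sigma_sum;
      [apply bounded_of_inj, inj_JI_sigma | apply bounded_nat; auto]. }
  destruct (hhom a_d_vars HsJD a_d_env (fun s u => env s (a_d_var s u))) as [g Hg].
  { intro chi. split; intro H1.
    - assert (H2 : bad_conditions (formula_rename chi Z a_d_var)) by (left; eauto).
      apply HTh in H2. rewrite sat_rename in H2. exact H2.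
    - apply NNPP; intro H3.
      assert (H2 : bad_conditions (formula_rename (fneg chi) Z a_d_var))
        by (left; exists (fneg chi); simpl; auto).
      apply HTh in H2. rewrite sat_rename in H2. exact (H2 H1). }
  assert (Hg' : type_product a l g).
  { apply (prod_of_chain L M I sI a _ _ _ type_rel_invariant l l_nonempty g _ Hch).
    apply functional_extensionality_dep; intro i. symmetry. exact (Hg (sI i) (inl (exist _ i eq_refl))). }
  apply definable_contains in Hg'.
  assert (H2 : bad_conditions (formula_rename (fneg psi) Z d_e_var)) by (right; auto).
  apply HTh in H2. rewrite sat_rename in H2. apply H2.
  assert (Eenv : param_env d e g = fun s x => env s (d_e_var s x)).
  { apply functional_extensionality_dep; intro s0; apply functional_extensionality.
    intros [x|y]; [exact (Hg s0 (inr x)) | reflexivity]. }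
  rewrite Eenv in Hg'. exact Hg'.
Qed.
End DefinableBound.

Lemma form_product_sub_definable (A : autset M) : rel_definable A ->
  (forall sigma, type_product a l sigma -> A sigma) ->
  exists phis, entailed_forms M l phis /\ forall sigma, form_product a l phis sigma -> A sigma.
Proof.
  intros HA Hsub. destruct (rel_definable_finite L M A HA) as [D [E [psi [d [e [HD [HE HDE]]]]]]].
  apply NNPP; intro Hn.
  apply (definable_bound_contradiction D E psi d e HD HE).
  - intros sigma Hs. apply HDE, Hsub, Hs.
  - intros phis HF. apply NNPP; intro H'. apply Hn. exists phis. split; auto.
    intros s Hs. apply HDE. apply NNPP; intro HnA. apply H'. eauto.
Qed.
End Compactness.

Theorem corollary5p8
  (L : language) (M : structure L) (K : Type)
  (* kappa = |K| is larger than |T| *)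
  (hK : small K (sort L + fsym L + rsym L + nat)%type)
  (hsat : saturated M K) (hhom : strongly_homogeneous M K)
  (* short tuples xbar, ybar of the same length and sorts, and the tuple a *)
  (I : Type) (sI : I -> sort L) (hI : small K I)
  (a : forall i : I, carrier M (sI i))
  (* the partial types pi_1..pi_n with signs eps_1..eps_n *)
  (l : list ((formula (XY sI) -> Prop) * bool)) :
  (forall sigma : aut M,
     aset_prod (map (fun p => (A_type a (fst p), snd p)) l) sigma <->
     (forall phis : list (formula (XY sI)),
        Forall2 (fun p phi => entails M (fst p) phi) l phis ->
        aset_prod (map (fun q => (A_form a (snd q), snd (fst q))) (combine l phis))
          sigma))
  /\
  (forall A : autset M, rel_definable A ->
     (forall sigma, aset_prod (map (fun p => (A_type a (fst p), snd p)) l) sigma ->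
                    A sigma) ->
     exists phis : list (formula (XY sI)),
       Forall2 (fun p phi => entails M (fst p) phi) l phis /\
       (forall sigma,
          aset_prod (map (fun q => (A_form a (snd q), snd (fst q))) (combine l phis))
            sigma -> A sigma)).
Proof.
  destruct (classic (l = [])) as [->|l_nonempty].
  - split; [intro s; split|].
    + intros H phis HF. inversion HF. exact H.
    + intro H. exact (H [] (Forall2_nil _)).
    + intros A _ Hsub. exists []. split; [constructor | exact Hsub].
  - split; [intro s; split|].
    + intros H phis HF. exact (type_product_sub_form_product L M I sI a l phis HF s H).
    + exact (type_product_of_form_products L M K hK hsat hhom I sI hI a l l_nonempty s).
    + exact (form_product_sub_definable L M K hK hsat hhom I sI hI a l l_nonempty).
Qed.
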